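(* Let $\alpha:\mathbb{M}^2\to\mathbb{R}^3$ be an immersion of class $C^r$, $r\ge6$, and let $0$ be a parabolic point of $\alpha$, parametrized in a Monge chart by $\alpha(x,y)=(x,y,h(x,y))$ with $$h(x,y)=\frac{k}{2}y^2+\frac{a}{6}x^3+\frac{b}{2}xy^2+\frac{d}{2}x^2y+\frac{c}{6}y^3+\frac{A}{24}x^4+\frac{B}{6}x^3y+\frac{C}{4}x^2y^2+\frac{D}{6}xy^3+\frac{E}{24}y^4+O(5).$$ Assume $k>0$ and $a^2+d^2\neq0$. Then the set of parabolic points ($\mathcal{K}=0$) is, near $0$, a regular curve normal to the vector $(a,d)$ at $0$. If $a\ne0$, the parabolic curve is transversal at $0$ to the minimal principal direction $(1,0)$. If $a=0$, the parabolic curve is tangent at $0$ to the principal direction $(1,0)$, and it has quadratic contact with the minimal principal curvature line through $0$ tangent to $(1,0)$ provided $dk(Ak-3d^2)\neq 0$.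
   Context: $\mathcal{K}$ denotes the Gaussian curvature of $\alpha$; a parabolic point is a point where $\mathcal{K}=0$. At $0$ the principal directions are $(1,0)$ (principal curvature $0$, the minimal one) and $(0,1)$ (principal curvature $k$); principal curvature lines are curves tangent to principal directions. *)

From Stdlib Require Import Reals Lra List.
From Coquelicot Require Import Coquelicot.
Open Scope R_scope.

(** Surfaces are studied in a Monge chart alpha(x,y) = (x, y, h x y),
    h : R -> R -> R. *)

Inductive dvar := dX | dY.

Definition pd (v : dvar) (f : R -> R -> R) : R -> R -> R :=
  match v with
  | dX => fun x y => Derive (fun t => f t y) x
  | dY => fun x y => Derive (fun t => f x t) y
  end.

Fixpoint pds (w : list dvar) (f : R -> R -> R) : R -> R -> R :=
  match w with
  | nil => f
  | v :: w' => pd v (pds w' f)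
  end.

Definition ex_pd (v : dvar) (f : R -> R -> R) (x y : R) : Prop :=
  match v with
  | dX => ex_derive (fun t => f t y) x
  | dY => ex_derive (fun t => f x t) y
  end.

Definition Cr_on (r : nat) (U : R -> R -> Prop) (f : R -> R -> R) : Prop :=
  forall w : list dvar, (length w <= r)%nat ->
  forall x y, U x y ->
    continuous (fun p : R * R => pds w f (fst p) (snd p)) (x, y) /\
    ((length w < r)%nat -> forall v, ex_pd v (pds w f) x y).

Definition disk (rho : R) : R -> R -> Prop := fun x y => x ^ 2 + y ^ 2 < rho ^ 2.

Definition hx  h := pds (dX :: nil) h.
Definition hy  h := pds (dY :: nil) h.
Definition hxx h := pds (dX :: dX :: nil) h.
Definition hxy h := pds (dX :: dY :: nil) h.
Definition hyy h := pds (dY :: dY :: nil) h.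

Definition fE h x y := 1 + hx h x y ^ 2.
Definition fF h x y := hx h x y * hy h x y.
Definition fG h x y := 1 + hy h x y ^ 2.
Definition Wn h x y := sqrt (1 + hx h x y ^ 2 + hy h x y ^ 2).
(** second fundamental form, unit normal (-h_x,-h_y,1)/W *)
Definition se h x y := hxx h x y / Wn h x y.
Definition sf h x y := hxy h x y / Wn h x y.
Definition sg h x y := hyy h x y / Wn h x y.

Definition gaussK h x y :=
  (se h x y * sg h x y - sf h x y ^ 2) / (fE h x y * fG h x y - fF h x y ^ 2).
Definition meanH h x y :=
  (se h x y * fG h x y - 2 * sf h x y * fF h x y + sg h x y * fE h x y)
  / (2 * (fE h x y * fG h x y - fF h x y ^ 2)).

Definition kmin h x y := meanH h x y - sqrt (meanH h x y ^ 2 - gaussK h x y).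

Definition principal_dir h (kap x y v1 v2 : R) : Prop :=
  (v1 <> 0 \/ v2 <> 0) /\
  (se h x y - kap * fE h x y) * v1 + (sf h x y - kap * fF h x y) * v2 = 0 /\
  (sf h x y - kap * fF h x y) * v1 + (sg h x y - kap * fG h x y) * v2 = 0.

Definition crvx (c : R -> R * R) : R -> R := fun t => fst (c t).
Definition crvy (c : R -> R * R) : R -> R := fun t => snd (c t).

Definition C2_on (eps : R) (f : R -> R) : Prop :=
  forall t, Rabs t < eps ->
    ex_derive f t /\ ex_derive (Derive f) t /\
    continuous (Derive f) t /\ continuous (Derive_n f 2) t.

Definition regular_C2_curve (eps : R) (c : R -> R * R) : Prop :=
  C2_on eps (crvx c) /\ C2_on eps (crvy c) /\
  forall t, Rabs t < eps -> (Derive (crvx c) t <> 0 \/ Derive (crvy c) t <> 0).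

Definition min_curvature_line h (eta : R) (beta : R -> R * R) : Prop :=
  regular_C2_curve eta beta /\
  forall t, Rabs t < eta ->
    principal_dir h (kmin h (crvx beta t) (crvy beta t)) (crvx beta t) (crvy beta t)
      (Derive (crvx beta) t) (Derive (crvy beta) t).

(** curvature of the graph y = q(x) at 0 for a curve c tangent to the x-axis
    at t = 0: d^2 y / dx^2 = y''(0) / x'(0)^2 (invariant under
    reparametrization). *)
Definition graph_second_deriv (c : R -> R * R) : R :=
  Derive_n (crvy c) 2 0 / (Derive (crvx c) 0) ^ 2.

Definition mongeP (k a b c d A B C D E x y : R) : R :=
  k / 2 * y ^ 2 + a / 6 * x ^ 3 + b / 2 * x * y ^ 2 + d / 2 * x ^ 2 * y
  + c / 6 * y ^ 3 + A / 24 * x ^ 4 + B / 6 * x ^ 3 * y + C / 4 * x ^ 2 * y ^ 2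
  + D / 6 * x * y ^ 3 + E / 24 * y ^ 4.

(* The parabolic set is the zero set of F = h_xx h_yy - h_xy^2, since the Gaussian
   curvature of a graph is F / W^4.  The Monge expansion gives F(0) = 0 and
   grad F(0) = k (a, d) <> 0, so by the implicit function theorem {F = 0} is near 0 a
   C^2 curve normal to (a, d): a graph y = phi(x) with phi'(0) = -a/d when d <> 0, and
   a graph x = psi(y) when d = 0.  If a = 0, then phi'(0) = 0 and
   phi''(0) = -F_xx(0) / F_y(0) = -(A k - 2 d^2) / (d k).  On the other hand, dividing
   the second principal-direction equation of a minimal curvature line beta tangent to
   (1, 0) by t and letting t -> 0 gives d beta_1'(0)^2 + k beta_2''(0) = 0, so beta has
   curvature -d/k as a graph over the x-axis.  The two agree iff A k = 3 d^2. *)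

From Stdlib Require Import Reals Lra List Lia ClassicalEpsilon.
From Coquelicot Require Import Coquelicot.
Open Scope R_scope.

(** * Differentiability on a box *)

Definition ex_diff_n_box (n : nat) (del : R) (f : R -> R -> R) : Prop :=
  forall u v, Rabs u < del -> Rabs v < del -> ex_diff_n f n u v.

Lemma pds_app w1 w2 f : pds (w1 ++ w2) f = pds w1 (pds w2 f).
Proof. induction w1 as [|v w IH]; simpl; [reflexivity | now rewrite IH]. Qed.

Lemma Cr_on_pds n U f w :
  (length w <= n)%nat -> Cr_on n U f -> Cr_on (n - length w) U (pds w f).
Proof.
  intros Hw H w' Hl x y Hxy. rewrite <- pds_app.
  destruct (H (w' ++ w)) with x y as [H1 H2]; [rewrite length_app; lia | exact Hxy |].
  split; [exact H1 |]. intros Hlt v. apply H2. rewrite length_app; lia.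
Qed.

Lemma Cr_on_le n m U f : (m <= n)%nat -> Cr_on n U f -> Cr_on m U f.
Proof.
  intros Hmn H w Hl x y Hxy. destruct (H w) with x y as [H1 H2]; [lia | exact Hxy |].
  split; [exact H1 |]. intros Hlt v. apply H2. lia.
Qed.

Lemma Cr_on_ex_diff_n n : forall U f x y, Cr_on n U f -> U x y -> ex_diff_n f n x y.
Proof.
  induction n as [|n IH]; intros U f x y H Hxy;
    destruct (H nil) with x y as [H1 H2]; simpl; try lia; try exact Hxy.
  - split; [now apply continuity_2d_pt_filterlim | exact I].
  - split; [now apply continuity_2d_pt_filterlim |].
    split; [exact (H2 ltac:(simpl; lia) dX) |].
    split; [exact (H2 ltac:(simpl; lia) dY) |].
    split; [apply (IH U (pd dX f)) | apply (IH U (pd dY f))]; try exact Hxy;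
      [pose proof (Cr_on_pds (S n) U f (dX :: nil) ltac:(simpl; lia) H) as H'
      |pose proof (Cr_on_pds (S n) U f (dY :: nil) ltac:(simpl; lia) H) as H'];
      simpl in H'; now replace n with (n - 0)%nat by lia.
Qed.

Lemma disk_of_box rho u v :
  Rabs u < rho / 2 -> Rabs v < rho / 2 -> disk rho u v.
Proof.
  intros Hu Hv. unfold disk. apply Rabs_def2 in Hu. apply Rabs_def2 in Hv. nra.
Qed.

Lemma box_of_disk del x y : 0 < del -> disk del x y -> Rabs x < del /\ Rabs y < del.
Proof.
  intros Hd H. unfold disk in H.
  pose proof (pow2_abs x). pose proof (pow2_abs y).
  pose proof (Rabs_pos x). pose proof (Rabs_pos y). split; nra.
Qed.

Lemma Cr_on_ex_diff_n_box r rho h w m :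
  Cr_on r (disk rho) h -> (length w + m <= r)%nat ->
  ex_diff_n_box m (rho / 2) (pds w h).
Proof.
  intros H Hl u v Hu Hv.
  apply (Cr_on_ex_diff_n m (disk rho)); [| now apply disk_of_box].
  apply Cr_on_le with (r - length w)%nat; [lia |]. apply Cr_on_pds; [lia | exact H].
Qed.

Lemma locally_2d_box del u v : Rabs u < del -> Rabs v < del ->
  locally_2d (fun u' v' => Rabs u' < del /\ Rabs v' < del) u v.
Proof.
  intros Hu Hv.
  assert (He : 0 < Rmin (del - Rabs u) (del - Rabs v)) by (apply Rmin_glb_lt; lra).
  exists (mkposreal _ He). intros u' v' H1 H2. simpl in H1, H2.
  pose proof (Rmin_l (del - Rabs u) (del - Rabs v)).
  pose proof (Rmin_r (del - Rabs u) (del - Rabs v)).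
  pose proof (Rabs_triang_inv u' u). pose proof (Rabs_triang_inv v' v).
  split; lra.
Qed.

Lemma ex_diff_n_box_locally n del f u v :
  ex_diff_n_box n del f -> Rabs u < del -> Rabs v < del ->
  locally_2d (ex_diff_n f n) u v.
Proof.
  intros H Hu Hv. eapply locally_2d_impl; [| exact (locally_2d_box del u v Hu Hv)].
  apply locally_2d_forall. intros u' v' [H1 H2]. now apply H.
Qed.

Lemma locally_2d_locally_2d P x y : locally_2d P x y -> locally_2d (locally_2d P) x y.
Proof. apply locally_2d_impl_strong, locally_2d_forall. now intros u v. Qed.

Lemma locally_2d_lift2 (P1 P2 Q : R -> R -> Prop) x y :
  (forall u v, locally_2d P1 u v -> locally_2d P2 u v -> Q u v) ->
  locally_2d P1 x y -> locally_2d P2 x y -> locally_2d Q x y.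
Proof.
  intros H H1 H2. apply locally_2d_locally_2d in H1. apply locally_2d_locally_2d in H2.
  eapply locally_2d_impl; [| exact (locally_2d_and _ _ _ _ H1 H2)].
  apply locally_2d_forall. intros u v [A1 A2]. now apply H.
Qed.

Lemma ex_diff_n_continuity_2d n f x y : ex_diff_n f n x y -> continuity_2d_pt f x y.
Proof. destruct n; simpl; tauto. Qed.

Lemma ex_diff_n_ex_derive_x n f x y : ex_diff_n f (S n) x y -> ex_derive (fun z => f z y) x.
Proof. simpl; tauto. Qed.

Lemma ex_diff_n_ex_derive_y n f x y : ex_diff_n f (S n) x y -> ex_derive (fun z => f x z) y.
Proof. simpl; tauto. Qed.

Lemma ex_diff_n_pd n v f x y : ex_diff_n f (S n) x y -> ex_diff_n (pd v f) n x y.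
Proof. destruct v; simpl; tauto. Qed.

Lemma locally_2d_ex_diff_n_pd n v f x y :
  locally_2d (ex_diff_n f (S n)) x y -> locally_2d (ex_diff_n (pd v f) n) x y.
Proof.
  apply locally_2d_impl, locally_2d_forall. intros u w. apply ex_diff_n_pd.
Qed.

Lemma locally_2d_ex_diff_n_S n f x y :
  locally_2d (ex_diff_n f (S n)) x y -> locally_2d (ex_diff_n f n) x y.
Proof.
  apply locally_2d_impl, locally_2d_forall. intros u v. apply ex_diff_n_m. lia.
Qed.

Lemma ex_diff_n_plus n : forall f g x y,
  locally_2d (ex_diff_n f n) x y -> locally_2d (ex_diff_n g n) x y ->
  ex_diff_n (fun u v => f u v + g u v) n x y.
Proof.
  induction n as [|n IH]; intros f g x y Hf Hg;
    pose proof (locally_2d_singleton _ _ _ Hf) as Hf0;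
    pose proof (locally_2d_singleton _ _ _ Hg) as Hg0;
    simpl; (split; [apply continuity_2d_pt_plus; eapply ex_diff_n_continuity_2d; eassumption |]).
  - exact I.
  - split; [apply (ex_derive_plus (fun z => f z y) (fun z => g z y));
            eapply ex_diff_n_ex_derive_x; eassumption |].
    split; [apply (ex_derive_plus (fun z => f x z) (fun z => g x z));
            eapply ex_diff_n_ex_derive_y; eassumption |].
    split; [apply ex_diff_n_ext_loc with (fun u v => pd dX f u v + pd dX g u v)
           |apply ex_diff_n_ext_loc with (fun u v => pd dY f u v + pd dY g u v)];
      try (apply IH; now apply locally_2d_ex_diff_n_pd);
      eapply locally_2d_impl; try exact (locally_2d_and _ _ _ _ Hf Hg);
      apply locally_2d_forall; intros u v [A1 A2]; simpl; symmetry; apply Derive_plus;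
      eauto using ex_diff_n_ex_derive_x, ex_diff_n_ex_derive_y.
Qed.

Lemma ex_diff_n_mult n : forall f g x y,
  locally_2d (ex_diff_n f n) x y -> locally_2d (ex_diff_n g n) x y ->
  ex_diff_n (fun u v => f u v * g u v) n x y.
Proof.
  induction n as [|n IH]; intros f g x y Hf Hg;
    pose proof (locally_2d_singleton _ _ _ Hf) as Hf0;
    pose proof (locally_2d_singleton _ _ _ Hg) as Hg0;
    simpl; (split; [apply continuity_2d_pt_mult; eapply ex_diff_n_continuity_2d; eassumption |]).
  - exact I.
  - split; [apply (ex_derive_mult (fun z => f z y) (fun z => g z y));
            eapply ex_diff_n_ex_derive_x; eassumption |].
    split; [apply (ex_derive_mult (fun z => f x z) (fun z => g x z));
            eapply ex_diff_n_ex_derive_y; eassumption |].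
    assert (Hprod : forall v, ex_diff_n
              (fun u w => pd v f u w * g u w + f u w * pd v g u w) n x y).
    { intro v. apply ex_diff_n_plus.
      - apply (locally_2d_lift2 (ex_diff_n (pd v f) n) (ex_diff_n g n));
          [intros u w; apply IH | now apply locally_2d_ex_diff_n_pd
          | now apply locally_2d_ex_diff_n_S].
      - apply (locally_2d_lift2 (ex_diff_n f n) (ex_diff_n (pd v g) n));
          [intros u w; apply IH | now apply locally_2d_ex_diff_n_S
          | now apply locally_2d_ex_diff_n_pd]. }
    split; [apply ex_diff_n_ext_loc with
              (fun u v => pd dX f u v * g u v + f u v * pd dX g u v)
           |apply ex_diff_n_ext_loc with
              (fun u v => pd dY f u v * g u v + f u v * pd dY g u v)];
      try apply Hprod;
      eapply locally_2d_impl; try exact (locally_2d_and _ _ _ _ Hf Hg);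
      apply locally_2d_forall; intros u v [A1 A2]; simpl;
      [rewrite (Derive_mult (fun t => f t v) (fun t => g t v) u)
      |rewrite (Derive_mult (fun t => f u t) (fun t => g u t) v)];
      eauto using ex_diff_n_ex_derive_x, ex_diff_n_ex_derive_y.
Qed.

Lemma ex_diff_n_const n : forall (c : R) x y, ex_diff_n (fun _ _ => c) n x y.
Proof.
  induction n as [|n IH]; intros c x y; simpl;
    (split; [apply continuity_2d_pt_const |]); [exact I |].
  split; [apply ex_derive_const |]. split; [apply ex_derive_const |].
  split; apply ex_diff_n_ext_loc with (fun _ _ => 0); try apply IH;
    apply locally_2d_forall; intros u v; now rewrite Derive_const.
Qed.

Lemma ex_diff_n_swap n : forall f x y,
  ex_diff_n f n x y -> ex_diff_n (fun u v => f v u) n y x.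
Proof.
  assert (Hc : forall f x y, continuity_2d_pt f x y ->
            continuity_2d_pt (fun u v => f v u) y x).
  { intros f x y H eps. destruct (H eps) as [e He]. exists e. intros u v Hu Hv. now apply He. }
  induction n as [|n IH]; intros f x y H; simpl in *.
  - split; [now apply Hc | exact I].
  - destruct H as [H0 [H1 [H2 [H3 H4]]]].
    split; [now apply Hc |]. split; [exact H2 |]. split; [exact H1 |].
    split; [exact (IH _ _ _ H4) | exact (IH _ _ _ H3)].
Qed.

Section BoxClosure.

Variables (n : nat) (del : R).

Lemma ex_diff_n_box_plus f g : ex_diff_n_box n del f -> ex_diff_n_box n del g ->
  ex_diff_n_box n del (fun u v => f u v + g u v).
Proof. intros Hf Hg u v Hu Hv. apply ex_diff_n_plus; eapply ex_diff_n_box_locally; eassumption. Qed.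

Lemma ex_diff_n_box_mult f g : ex_diff_n_box n del f -> ex_diff_n_box n del g ->
  ex_diff_n_box n del (fun u v => f u v * g u v).
Proof. intros Hf Hg u v Hu Hv. apply ex_diff_n_mult; eapply ex_diff_n_box_locally; eassumption. Qed.

Lemma ex_diff_n_box_ext f g : (forall u v, f u v = g u v) ->
  ex_diff_n_box n del f -> ex_diff_n_box n del g.
Proof.
  intros E H u v Hu Hv.
  apply ex_diff_n_ext_loc with f; [now apply locally_2d_forall | now apply H].
Qed.

Lemma ex_diff_n_box_scal (c : R) f : ex_diff_n_box n del f ->
  ex_diff_n_box n del (fun u v => c * f u v).
Proof.
  intros Hf. apply (ex_diff_n_box_mult (fun _ _ => c)); [| exact Hf].
  intros u v _ _. apply ex_diff_n_const.
Qed.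

Lemma ex_diff_n_box_minus f g : ex_diff_n_box n del f -> ex_diff_n_box n del g ->
  ex_diff_n_box n del (fun u v => f u v - g u v).
Proof.
  intros Hf Hg. apply ex_diff_n_box_ext with (fun u v => f u v + -1 * g u v).
  - intros; ring.
  - now apply ex_diff_n_box_plus, ex_diff_n_box_scal.
Qed.

Lemma ex_diff_n_box_swap f : ex_diff_n_box n del f -> ex_diff_n_box n del (fun u v => f v u).
Proof. intros H u v Hu Hv. apply (ex_diff_n_swap n f v u). now apply H. Qed.

Lemma ex_diff_n_box_le m f : (m <= n)%nat -> ex_diff_n_box n del f -> ex_diff_n_box m del f.
Proof. intros Hl H u v Hu Hv. apply ex_diff_n_m with n; [exact Hl | now apply H]. Qed.

End BoxClosure.

Lemma ex_diff_n_box_pd n del v f : ex_diff_n_box (S n) del f -> ex_diff_n_box n del (pd v f).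
Proof. intros H u w Hu Hw. apply ex_diff_n_pd. now apply H. Qed.

(** * The implicit function theorem *)

Lemma Rabs_between a b c r :
  Rmin a b <= c <= Rmax a b -> Rabs a < r -> Rabs b < r -> Rabs c < r.
Proof.
  intros [H1 H2] Ha Hb. unfold Rmin, Rmax in *.
  apply Rabs_def2 in Ha. apply Rabs_def2 in Hb.
  destruct (Rle_dec a b); apply Rabs_def1; lra.
Qed.

Lemma Rabs_between_dist a b c :
  Rmin a b <= c <= Rmax a b -> Rabs (c - a) <= Rabs (b - a).
Proof.
  intros [H1 H2]. unfold Rmin, Rmax in *.
  destruct (Rle_dec a b); [rewrite !Rabs_right | rewrite !Rabs_left1]; lra.
Qed.

Lemma continuity_pt_of_ex_derive (f : R -> R) x : ex_derive f x -> continuity_pt f x.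
Proof. intro H. now apply continuity_pt_filterlim, (ex_derive_continuous f). Qed.

Lemma MVT_between (f df : R -> R) a b :
  (forall x, Rmin a b <= x <= Rmax a b -> is_derive f x (df x)) ->
  exists c, Rmin a b <= c <= Rmax a b /\ f b - f a = df c * (b - a).
Proof.
  intros Hd. apply MVT_gen.
  - intros x Hx. apply Hd. lra.
  - intros x Hx. apply continuity_pt_of_ex_derive. eexists. now apply Hd.
Qed.

Lemma continuity_2d_pt_pos_near f x y : continuity_2d_pt f x y -> 0 < f x y ->
  exists eta, 0 < eta /\
    forall u v, Rabs (u - x) < eta -> Rabs (v - y) < eta -> 0 < f u v.
Proof.
  intros Hc Hpos. destruct (Hc (mkposreal _ Hpos)) as [eta Heta].
  exists eta. split; [apply cond_pos |]. intros u v Hu Hv.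
  specialize (Heta u v Hu Hv). simpl in Heta. apply Rabs_def2 in Heta. lra.
Qed.

Lemma ex_diff_n_differentiable f x y : locally_2d (ex_diff_n f 2) x y ->
  differentiable_pt_lim f x y (pd dX f x y) (pd dY f x y).
Proof.
  intro H. destruct (Taylor_Lagrange_2d f 1 x y H) as [D [e He]].
  intros eps.
  assert (Hp : 0 < Rmin e (eps / (Rabs D + 1))).
  { apply Rmin_glb_lt; [apply cond_pos |].
    apply Rdiv_lt_0_compat; [apply cond_pos | pose proof (Rabs_pos D); lra]. }
  exists (mkposreal _ Hp). intros u v Hu Hv. simpl in Hu, Hv.
  pose proof (Rmin_l e (eps / (Rabs D + 1))). pose proof (Rmin_r e (eps / (Rabs D + 1))).
  specialize (He u v ltac:(lra) ltac:(lra)).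
  assert (HDL : DL_pol 1 f x y (u - x) (v - y)
                = f x y + (pd dX f x y * (u - x) + pd dY f x y * (v - y))).
  { unfold DL_pol, differential, partial_derive, Binomial.C. simpl. field. }
  rewrite HDL in He.
  set (M := Rmax (Rabs (u - x)) (Rabs (v - y))) in *.
  assert (HM0 : 0 <= M) by (unfold M; eapply Rle_trans; [apply Rabs_pos | apply Rmax_l]).
  assert (HMe : M * (Rabs D + 1) <= eps).
  { assert (HM : M < eps / (Rabs D + 1)) by (unfold M; apply Rmax_lub_lt; lra).
    pose proof (Rabs_pos D). apply (Rmult_lt_compat_r (Rabs D + 1)) in HM; [| lra].
    unfold Rdiv in HM. rewrite Rmult_assoc, Rinv_l in HM; lra. }
  replace (f u v - f x y - (pd dX f x y * (u - x) + pd dY f x y * (v - y)))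
    with (f u v - (f x y + (pd dX f x y * (u - x) + pd dY f x y * (v - y)))) by ring.
  eapply Rle_trans; [exact He |].
  pose proof (Rle_abs D). pose proof (Rabs_pos D).
  assert (0 <= (Rabs D - D) * (M * M)) by (apply Rmult_le_pos; nra).
  assert (0 <= (eps - M * (Rabs D + 1)) * M) by (apply Rmult_le_pos; lra).
  nra.
Qed.

Definition implicit_slope (G : R -> R -> R) (u v : R) : R :=
  - (pd dX G u v / pd dY G u v).

(** Derivative of [t |-> implicit_slope G t (phi t)] along a solution [phi] of
    [G t (phi t) = 0], by the chain rule and [phi' = implicit_slope G]. *)
Definition implicit_slope_derive (G : R -> R -> R) (u v : R) : R :=
  - (((pd dX (pd dX G) u v + pd dY (pd dX G) u v * implicit_slope G u v) * pd dY G u v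
      - pd dX G u v * (pd dX (pd dY G) u v + pd dY (pd dY G) u v * implicit_slope G u v))
     / pd dY G u v ^ 2).

Lemma continuity_pt_comp_2d (f : R -> R -> R) (p q : R -> R) s :
  continuity_2d_pt f (p s) (q s) -> continuity_pt p s -> continuity_pt q s ->
  continuity_pt (fun t => f (p t) (q t)) s.
Proof.
  intros Hf Hp Hq eps Heps.
  destruct (Hf (mkposreal _ Heps)) as [e He].
  destruct (Hp e (cond_pos e)) as [a1 [Ha1 H1]].
  destruct (Hq e (cond_pos e)) as [a2 [Ha2 H2]].
  exists (Rmin a1 a2). split; [now apply Rmin_glb_lt |].
  intros t [_ Ht]. simpl in *. unfold R_dist in *.
  pose proof (Rmin_l a1 a2). pose proof (Rmin_r a1 a2).
  assert (Hclose : forall (g : R -> R) a, (forall x, D_x no_cond s x /\ Rabs (x - s) < a ->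
            Rabs (g x - g s) < e) -> Rabs (t - s) < a -> Rabs (g t - g s) < e).
  { intros g a Hg Hta. destruct (Req_dec t s) as [-> | Hne].
    - rewrite Rminus_diag_eq, Rabs_R0 by reflexivity. apply cond_pos.
    - apply Hg. repeat split; auto. }
  apply He; [apply (Hclose p a1) | apply (Hclose q a2)]; auto; lra.
Qed.

Lemma implicit_slope_derive_continuous G u v :
  ex_diff_n G 3 u v -> pd dY G u v <> 0 -> continuity_2d_pt (implicit_slope_derive G) u v.
Proof.
  intros HG Hy.
  assert (C1 : forall w, continuity_2d_pt (pd w G) u v)
    by (intro w; apply (ex_diff_n_continuity_2d 2), ex_diff_n_pd, HG).
  assert (C2 : forall w w', continuity_2d_pt (pd w (pd w' G)) u v)
    by (intros w w'; apply (ex_diff_n_continuity_2d 1), ex_diff_n_pd, ex_diff_n_pd, HG).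
  assert (CQ : continuity_2d_pt (implicit_slope G) u v).
  { apply continuity_2d_pt_opp, continuity_2d_pt_mult; [apply C1 |].
    apply continuity_2d_pt_inv; [apply C1 | exact Hy]. }
  apply continuity_2d_pt_opp, continuity_2d_pt_mult.
  - repeat first [ apply continuity_2d_pt_minus | apply continuity_2d_pt_plus
                 | apply continuity_2d_pt_mult | apply C1 | apply C2 | exact CQ ].
  - apply continuity_2d_pt_inv; [| now apply pow_nonzero].
    apply continuity_2d_pt_ext_loc with (fun u v => pd dY G u v * pd dY G u v);
      [apply locally_2d_forall; intros; ring | apply continuity_2d_pt_mult; apply C1].
Qed.

Definition implicit_solution (G : R -> R -> R) (e1 b : R) (phi : R -> R) : Prop :=
  0 < e1 /\ 0 < b /\ phi 0 = 0 /\
  (forall s, Rabs s < e1 -> Rabs (phi s) < b /\ G s (phi s) = 0) /\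
  (forall s t, Rabs s < e1 -> Rabs t < b -> G s t = 0 -> t = phi s) /\
  C2_on e1 phi /\
  Derive phi 0 = implicit_slope G 0 0 /\
  (pd dX G 0 0 = 0 -> Derive_n phi 2 0 = - (pd dX (pd dX G) 0 0 / pd dY G 0 0)).

Section ImplicitFunction.

Variables (G : R -> R -> R) (del e : R).
Hypotheses (HG : ex_diff_n_box 3 del G) (He : 0 < e) (Hed : e <= del)
  (HGy : forall u v, Rabs u < e -> Rabs v < e -> 0 < pd dY G u v).

Lemma G_ex_diff_n u v : Rabs u < e -> Rabs v < e -> ex_diff_n G 3 u v.
Proof. intros Hu Hv. apply HG; lra. Qed.

Lemma G_is_derive_y s t : Rabs s < e -> Rabs t < e ->
  is_derive (fun t => G s t) t (pd dY G s t).
Proof.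
  intros Hs Ht. apply (Derive_correct (fun t => G s t)).
  apply (ex_diff_n_ex_derive_y 2). now apply G_ex_diff_n.
Qed.

Lemma G_is_derive_x s t : Rabs s < e -> Rabs t < e ->
  is_derive (fun s => G s t) s (pd dX G s t).
Proof.
  intros Hs Ht. apply (Derive_correct (fun s => G s t)).
  apply (ex_diff_n_ex_derive_x 2). now apply G_ex_diff_n.
Qed.

Lemma G_increasing s t1 t2 : Rabs s < e -> Rabs t1 < e -> Rabs t2 < e -> t1 < t2 ->
  G s t1 < G s t2.
Proof.
  intros Hs H1 H2 Hlt.
  destruct (MVT_between (fun t => G s t) (pd dY G s) t1 t2) as [c [Hc Heq]].
  - intros x Hx. apply G_is_derive_y; [exact Hs | eapply Rabs_between; eassumption].
  - assert (0 < pd dY G s c) by (apply HGy; [exact Hs | eapply Rabs_between; eassumption]).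
    nra.
Qed.

Lemma G_zero_unique s t1 t2 : Rabs s < e -> Rabs t1 < e -> Rabs t2 < e ->
  G s t1 = 0 -> G s t2 = 0 -> t1 = t2.
Proof.
  intros Hs H1 H2 Z1 Z2.
  destruct (Rtotal_order t1 t2) as [Hl | [Heq | Hg]]; [| exact Heq |]; exfalso;
    [pose proof (G_increasing s t1 t2) | pose proof (G_increasing s t2 t1)]; lra.
Qed.

Lemma G_root_persists s0 lo hi :
  Rabs s0 < e -> Rabs lo < e -> Rabs hi < e -> G s0 lo < 0 -> 0 < G s0 hi ->
  exists eta, 0 < eta /\ forall s, Rabs (s - s0) < eta -> Rabs s < e ->
    exists t, lo < t < hi /\ G s t = 0.
Proof.
  intros Hs0 Hlo Hhi Glo Ghi.
  assert (Hlh : lo < hi).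
  { destruct (Rtotal_order lo hi) as [L | [E' | L]]; [exact L | subst; lra |].
    pose proof (G_increasing s0 hi lo Hs0 Hhi Hlo L). lra. }
  destruct (continuity_2d_pt_pos_near G s0 hi) as [eta1 [He1 P1]];
    [apply (ex_diff_n_continuity_2d 3), G_ex_diff_n; assumption | exact Ghi |].
  destruct (continuity_2d_pt_pos_near (fun u v => - G u v) s0 lo) as [eta2 [He2 P2]];
    [apply continuity_2d_pt_opp, (ex_diff_n_continuity_2d 3), G_ex_diff_n; assumption | lra |].
  exists (Rmin eta1 eta2). split; [now apply Rmin_glb_lt |].
  intros s Hs Hse. pose proof (Rmin_l eta1 eta2). pose proof (Rmin_r eta1 eta2).
  assert (Z : forall z, Rabs (z - z) < Rmin eta1 eta2)
    by (intro z; rewrite Rminus_diag_eq, Rabs_R0 by reflexivity; now apply Rmin_glb_lt).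
  assert (Ph : 0 < G s hi) by (apply P1; [lra | pose proof (Z hi); lra]).
  assert (Pl : 0 < - G s lo) by (apply P2; [lra | pose proof (Z lo); lra]).
  destruct (Ranalysis5.IVT_interv (fun t => G s t) lo hi) as [z [Hz Gz]];
    [| exact Hlh | lra | exact Ph |].
  - intros t Ht. apply continuity_pt_of_ex_derive. eexists. apply G_is_derive_y; [exact Hse |].
    apply Rabs_def2 in Hlo. apply Rabs_def2 in Hhi. apply Rabs_def1; lra.
  - exists z. split; [| exact Gz].
    destruct (Req_dec z lo); [subst; lra |]. destruct (Req_dec z hi); [subst; lra |]. lra.
Qed.

Lemma G_roots_near_origin : G 0 0 = 0 -> exists e1, 0 < e1 /\ e1 <= e /\
  forall s, Rabs s < e1 -> exists t, Rabs t < e / 2 /\ G s t = 0.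
Proof.
  intro H0.
  assert (Hb : Rabs (e / 2) < e /\ Rabs (- (e / 2)) < e /\ Rabs 0 < e)
    by (rewrite Rabs_Ropp, Rabs_R0, Rabs_right; lra).
  assert (Gneg : G 0 (- (e / 2)) < G 0 0) by (apply G_increasing; first [tauto | lra]).
  assert (Gpos : G 0 0 < G 0 (e / 2)) by (apply G_increasing; first [tauto | lra]).
  destruct (G_root_persists 0 (- (e / 2)) (e / 2)) as [eta [Heta Hr]]; try tauto; try lra.
  exists (Rmin eta e). split; [now apply Rmin_glb_lt |]. split; [apply Rmin_r |].
  intros s Hs. pose proof (Rmin_l eta e). pose proof (Rmin_r eta e).
  destruct (Hr s ltac:(rewrite Rminus_0_r; lra) ltac:(lra)) as [t [Ht Gt]].
  exists t. split; [apply Rabs_def1; lra | exact Gt].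
Qed.

Lemma slope_ratio_near s0 t0 : Rabs s0 < e -> Rabs t0 < e ->
  forall eps, 0 < eps -> exists r, 0 < r /\ forall u1 v1 u2 v2,
    Rabs (u1 - s0) < r -> Rabs (v1 - t0) < r -> Rabs (u2 - s0) < r -> Rabs (v2 - t0) < r ->
    Rabs (pd dX G u1 v1 / pd dY G u2 v2 - pd dX G s0 t0 / pd dY G s0 t0) < eps.
Proof.
  intros Hs0 Ht0 eps Heps.
  assert (Hgy : 0 < pd dY G s0 t0) by now apply HGy.
  assert (CQ : continuity_2d_pt (fun p q => p / q) (pd dX G s0 t0) (pd dY G s0 t0)).
  { apply continuity_2d_pt_mult; [apply continuity_2d_pt_id1 |].
    apply (continuity_2d_pt_inv (fun p q => q)); [apply continuity_2d_pt_id2 | lra]. }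
  destruct (CQ (mkposreal _ Heps)) as [rh Hrh]. cbn [pos] in Hrh.
  assert (C : forall v, continuity_2d_pt (pd v G) s0 t0)
    by (intro v; apply (ex_diff_n_continuity_2d 2), ex_diff_n_pd, G_ex_diff_n; lra).
  destruct (C dX rh) as [r1 Hr1]. destruct (C dY rh) as [r2 Hr2].
  exists (Rmin r1 r2). split; [apply Rmin_glb_lt; apply cond_pos |].
  pose proof (Rmin_l r1 r2). pose proof (Rmin_r r1 r2).
  intros u1 v1 u2 v2 H1 H2 H3 H4. apply Hrh; [apply Hr1 | apply Hr2]; lra.
Qed.

Variable e1 : R.
Hypotheses (He1e : e1 <= e)
  (Hroots : forall s, Rabs s < e1 -> exists t, Rabs t < e / 2 /\ G s t = 0).

Definition implicit_fun (s : R) : R :=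
  epsilon (inhabits 0) (fun t => Rabs t < e / 2 /\ G s t = 0).

Lemma implicit_fun_spec s : Rabs s < e1 ->
  Rabs (implicit_fun s) < e / 2 /\ G s (implicit_fun s) = 0.
Proof. intro Hs. unfold implicit_fun. apply epsilon_spec. now apply Hroots. Qed.

Lemma implicit_fun_unique s t : Rabs s < e1 -> Rabs t < e -> G s t = 0 ->
  t = implicit_fun s.
Proof.
  intros Hs Ht Z. destruct (implicit_fun_spec s Hs) as [P1 P2].
  apply (G_zero_unique s); lra.
Qed.

Lemma implicit_fun_continuous s0 : Rabs s0 < e1 ->
  forall eps, 0 < eps -> exists eta, 0 < eta /\ forall s,
    Rabs (s - s0) < eta -> Rabs s < e1 -> Rabs (implicit_fun s - implicit_fun s0) < eps.
Proof.
  intros Hs0 eps Heps.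
  destruct (implicit_fun_spec s0 Hs0) as [P1 P2]. set (t0 := implicit_fun s0) in *.
  set (ep := Rmin eps (e / 4)).
  assert (Hep : 0 < ep) by (apply Rmin_glb_lt; lra).
  pose proof (Rmin_l eps (e / 4)). pose proof (Rmin_r eps (e / 4)).
  apply Rabs_def2 in P1.
  assert (Hlo : Rabs (t0 - ep) < e) by (apply Rabs_def1; unfold ep in *; lra).
  assert (Hhi : Rabs (t0 + ep) < e) by (apply Rabs_def1; unfold ep in *; lra).
  assert (Ht0 : Rabs t0 < e) by (apply Rabs_def1; lra).
  destruct (G_root_persists s0 (t0 - ep) (t0 + ep)) as [eta [Heta Hroot]]; try lra.
  - pose proof (G_increasing s0 (t0 - ep) t0). lra.
  - pose proof (G_increasing s0 t0 (t0 + ep)). lra.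
  - exists eta. split; [exact Heta |]. intros s Hs Hse.
    destruct (Hroot s Hs ltac:(lra)) as [t [Ht Gt]].
    apply Rabs_def2 in Hlo. apply Rabs_def2 in Hhi.
    rewrite <- (implicit_fun_unique s t Hse); [| apply Rabs_def1; lra | exact Gt].
    apply Rabs_def1; unfold ep in *; lra.
Qed.

(** Two mean value theorems, in [t] at fixed [s] and in [s] at fixed [phi s0],
    since [G] vanishes at both [(s0, phi s0)] and [(s, phi s)]. *)
Lemma implicit_fun_increment s0 s : Rabs s0 < e1 -> Rabs s < e1 ->
  exists et xi,
    Rabs (et - s0) <= Rabs (s - s0) /\
    Rabs (xi - implicit_fun s0) <= Rabs (implicit_fun s - implicit_fun s0) /\
    Rabs xi < e /\
    (implicit_fun s - implicit_fun s0) * pd dY G s xi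
      = - pd dX G et (implicit_fun s0) * (s - s0).
Proof.
  intros Hs0 Hs.
  destruct (implicit_fun_spec s0 Hs0) as [P1 P2]. destruct (implicit_fun_spec s Hs) as [Q1 Q2].
  set (t0 := implicit_fun s0) in *. set (t := implicit_fun s) in *.
  destruct (MVT_between (fun t => G s t) (pd dY G s) t0 t) as [xi [Hxi Exi]].
  { intros x Hx. apply G_is_derive_y; [lra | eapply Rabs_between; [exact Hx | lra | lra]]. }
  destruct (MVT_between (fun u => G u t0) (fun u => pd dX G u t0) s0 s) as [et [Het Eet]].
  { intros x Hx. apply G_is_derive_x; [eapply Rabs_between; [exact Hx | lra | lra] | lra]. }
  exists et, xi. split; [now apply Rabs_between_dist |].
  split; [now apply Rabs_between_dist |].
  split; [eapply Rabs_between; [exact Hxi | lra | lra] |].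
  cbv beta in Exi, Eet. nra.
Qed.

Lemma implicit_fun_derive s0 : Rabs s0 < e1 ->
  is_derive implicit_fun s0 (implicit_slope G s0 (implicit_fun s0)).
Proof.
  intro Hs0. destruct (implicit_fun_spec s0 Hs0) as [P1 P2].
  set (t0 := implicit_fun s0) in *.
  apply is_derive_Reals. intros eps Heps.
  destruct (slope_ratio_near s0 t0 ltac:(lra) ltac:(lra) eps Heps) as [r [Hr Hratio]].
  destruct (implicit_fun_continuous s0 Hs0 r Hr) as [eta [Heta Hc]].
  set (dl := Rmin (Rmin eta r) (e1 - Rabs s0)).
  assert (Hdl : 0 < dl) by (apply Rmin_glb_lt; [now apply Rmin_glb_lt | lra]).
  assert (dl <= eta /\ dl <= r /\ dl <= e1 - Rabs s0) as (D1 & D2 & D3).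
  { unfold dl. pose proof (Rmin_l (Rmin eta r) (e1 - Rabs s0)).
    pose proof (Rmin_r (Rmin eta r) (e1 - Rabs s0)).
    pose proof (Rmin_l eta r). pose proof (Rmin_r eta r). lra. }
  exists (mkposreal _ Hdl). intros hh Hh0 Hh. cbn [pos] in Hh. fold t0.
  assert (Hs : Rabs (s0 + hh) < e1) by (eapply Rle_lt_trans; [apply Rabs_triang | lra]).
  replace hh with (s0 + hh - s0) in Hh by ring.
  destruct (implicit_fun_increment s0 (s0 + hh) Hs0 Hs) as (et & xi & Det & Dxi & Hxi & Key).
  fold t0 in Dxi, Key.
  assert (Hps : Rabs (implicit_fun (s0 + hh) - t0) < r) by (apply Hc; lra).
  assert (Hq : 0 < pd dY G (s0 + hh) xi) by (apply HGy; lra).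
  replace ((implicit_fun (s0 + hh) - t0) / hh) with (- (pd dX G et t0 / pd dY G (s0 + hh) xi)).
  2:{ apply (Rmult_eq_reg_r (hh * pd dY G (s0 + hh) xi));
        [| apply Rmult_integral_contrapositive; lra].
      replace (s0 + hh - s0) with hh in Key by ring. field_simplify; lra. }
  unfold implicit_slope.
  replace (- (pd dX G et t0 / pd dY G (s0 + hh) xi) - - (pd dX G s0 t0 / pd dY G s0 t0))
    with (- (pd dX G et t0 / pd dY G (s0 + hh) xi - pd dX G s0 t0 / pd dY G s0 t0)) by ring.
  rewrite Rabs_Ropp. apply Hratio; rewrite ?Rminus_diag_eq, ?Rabs_R0 by reflexivity; lra.
Qed.

Lemma implicit_fun_Derive s : Rabs s < e1 ->
  Derive implicit_fun s = implicit_slope G s (implicit_fun s).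
Proof. intro Hs. now apply is_derive_unique, implicit_fun_derive. Qed.

Lemma implicit_fun_Derive_locally s : Rabs s < e1 ->
  locally s (fun t => implicit_slope G t (implicit_fun t) = Derive implicit_fun t).
Proof.
  intro Hs. exists (mkposreal (e1 - Rabs s) ltac:(lra)). intros t Ht.
  symmetry. apply implicit_fun_Derive.
  change (Rabs (t - s) < e1 - Rabs s) in Ht. pose proof (Rabs_triang_inv t s). lra.
Qed.

Lemma implicit_slope_along_derive s : Rabs s < e1 ->
  is_derive (fun t => implicit_slope G t (implicit_fun t)) s
    (implicit_slope_derive G s (implicit_fun s)).
Proof.
  intro Hs. destruct (implicit_fun_spec s Hs) as [P1 P2].
  assert (Hd : forall w, is_derive (fun t => pd w G t (implicit_fun t)) s
     (pd dX (pd w G) s (implicit_fun s) * 1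
      + pd dY (pd w G) s (implicit_fun s) * implicit_slope G s (implicit_fun s))).
  { intro w. apply is_derive_Reals, derivable_pt_lim_comp_2d.
    - apply ex_diff_n_differentiable, (ex_diff_n_box_locally 2 del);
        [apply ex_diff_n_box_pd, HG | lra | lra].
    - apply derivable_pt_lim_id.
    - now apply is_derive_Reals, implicit_fun_derive. }
  assert (Hy : 0 < pd dY G s (implicit_fun s)) by (apply HGy; lra).
  pose proof (is_derive_opp _ _ _ (is_derive_div _ _ _ _ _ (Hd dX) (Hd dY) ltac:(lra))) as R.
  unfold implicit_slope_derive. rewrite !Rmult_1_r in R. exact R.
Qed.

Lemma implicit_fun_Derive_2 s : Rabs s < e1 ->
  Derive_n implicit_fun 2 s = implicit_slope_derive G s (implicit_fun s).
Proof.
  intro Hs. change (Derive_n implicit_fun 2 s) with (Derive (Derive implicit_fun) s).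
  rewrite (Derive_ext_loc _ (fun t => implicit_slope G t (implicit_fun t)) s).
  - now apply is_derive_unique, implicit_slope_along_derive.
  - eapply filter_imp; [| exact (implicit_fun_Derive_locally s Hs)]. now intros t ->.
Qed.

Lemma implicit_fun_C2 : C2_on e1 implicit_fun.
Proof.
  intros t Ht. destruct (implicit_fun_spec t Ht) as [P1 P2].
  pose proof (implicit_fun_Derive_locally t Ht) as HL.
  split; [eexists; now apply implicit_fun_derive |].
  split; [apply (ex_derive_ext_loc _ _ t HL); eexists; now apply implicit_slope_along_derive |].
  split.
  - apply (continuous_ext_loc (Derive implicit_fun) _ t HL).
    apply (ex_derive_continuous (K := R_AbsRing) (fun s => implicit_slope G s (implicit_fun s))).
    eexists; now apply implicit_slope_along_derive.
  - apply (continuous_ext_loc (Derive_n implicit_fun 2)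
             (fun s => implicit_slope_derive G s (implicit_fun s)) t).
    + exists (mkposreal (e1 - Rabs t) ltac:(lra)). intros s Hs. symmetry. apply implicit_fun_Derive_2.
      change (Rabs (s - t) < e1 - Rabs t) in Hs. pose proof (Rabs_triang_inv s t). lra.
    + apply continuity_pt_filterlim, (continuity_pt_comp_2d _ (fun s => s)).
      * apply implicit_slope_derive_continuous; [apply G_ex_diff_n; lra |].
        apply Rgt_not_eq, HGy; lra.
      * apply continuity_pt_id.
      * apply continuity_pt_of_ex_derive. eexists. now apply implicit_fun_derive.
Qed.

Lemma implicit_fun_solution : G 0 0 = 0 -> 0 < e1 ->
  implicit_solution G e1 (e / 2) implicit_fun.
Proof.
  intros H0 He1. assert (Z1 : Rabs 0 < e1) by (rewrite Rabs_R0; exact He1).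
  assert (Hphi0 : implicit_fun 0 = 0)
    by (symmetry; apply implicit_fun_unique; first [rewrite Rabs_R0; lra | exact H0]).
  split; [exact He1 |]. split; [lra |]. split; [exact Hphi0 |].
  split; [exact implicit_fun_spec |].
  split; [intros s t Hs Ht; apply implicit_fun_unique; [exact Hs | lra] |].
  split; [exact implicit_fun_C2 |].
  split.
  - rewrite (implicit_fun_Derive 0 Z1). now rewrite Hphi0.
  - intro Hx. rewrite (implicit_fun_Derive_2 0 Z1), Hphi0.
    unfold implicit_slope_derive, implicit_slope. rewrite Hx.
    field. apply Rgt_not_eq, HGy; rewrite Rabs_R0; lra.
Qed.

End ImplicitFunction.

Lemma implicit_function_pos G del : 0 < del -> ex_diff_n_box 3 del G ->
  G 0 0 = 0 -> 0 < pd dY G 0 0 -> exists e1 b phi, implicit_solution G e1 b phi.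
Proof.
  intros Hdel HG H0 Hy.
  assert (Z : Rabs 0 < del) by (rewrite Rabs_R0; exact Hdel).
  destruct (continuity_2d_pt_pos_near (pd dY G) 0 0) as [eta [Heta Hpos]];
    [apply (ex_diff_n_continuity_2d 2), ex_diff_n_pd, HG, Z; exact Z | exact Hy |].
  set (e := Rmin eta del).
  assert (He : 0 < e) by now apply Rmin_glb_lt.
  assert (Hed : e <= del) by apply Rmin_r.
  assert (Heeta : e <= eta) by apply Rmin_l.
  assert (HGy : forall u v, Rabs u < e -> Rabs v < e -> 0 < pd dY G u v)
    by (intros u v Hu Hv; apply Hpos; rewrite Rminus_0_r; lra).
  destruct (G_roots_near_origin G del e HG He Hed HGy H0) as (e1 & He1 & He1e & Hroots).
  exists e1, (e / 2), (implicit_fun G e).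
  exact (implicit_fun_solution G del e HG He Hed HGy e1 He1e Hroots H0 He1).
Qed.

Lemma pd_opp v f x y : pd v (fun u w => - f u w) x y = - pd v f x y.
Proof. destruct v; simpl; apply Derive_opp. Qed.

Lemma implicit_solution_opp G e1 b phi :
  implicit_solution (fun u v => - G u v) e1 b phi -> implicit_solution G e1 b phi.
Proof.
  intros (He1 & Hb & H0 & Hs & Hu & HC2 & HD & HD2).
  assert (Hxx : pd dX (pd dX (fun u v => - G u v)) 0 0 = - pd dX (pd dX G) 0 0).
  { rewrite <- pd_opp. apply Derive_ext. intro t. apply pd_opp. }
  unfold implicit_slope in HD. rewrite !pd_opp in HD, HD2. rewrite Hxx in HD2.
  assert (Hdiv : forall p q, p / q = - p / - q).
  { intros p q. destruct (Req_dec q 0) as [-> | E].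
    - rewrite Ropp_0. unfold Rdiv. rewrite Rinv_0. ring.
    - field. exact E. }
  split; [exact He1 |]. split; [exact Hb |]. split; [exact H0 |].
  split; [intros s Hs'; destruct (Hs s Hs') as [P1 P2]; split; [exact P1 | lra] |].
  split; [intros s t Hs' Ht Z; apply Hu; [exact Hs' | exact Ht | lra] |].
  split; [exact HC2 |].
  split.
  - unfold implicit_slope. rewrite HD, (Hdiv (pd dX G 0 0)). reflexivity.
  - intro Hx. rewrite HD2 by lra. now rewrite (Hdiv (pd dX (pd dX G) 0 0)).
Qed.

Theorem implicit_function_theorem G del : 0 < del -> ex_diff_n_box 3 del G ->
  G 0 0 = 0 -> pd dY G 0 0 <> 0 -> exists e1 b phi, implicit_solution G e1 b phi.
Proof.
  intros Hdel HG H0 Hy. destruct (Rlt_or_le 0 (pd dY G 0 0)) as [Hp | Hn].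
  - now apply (implicit_function_pos G del).
  - destruct (implicit_function_pos (fun u v => - G u v) del) as (e1 & b & phi & Hsol).
    + exact Hdel.
    + apply (ex_diff_n_box_ext 3 del (fun u v => -1 * G u v)); [intros; ring |].
      now apply ex_diff_n_box_scal.
    + lra.
    + rewrite pd_opp. lra.
    + exists e1, b, phi. now apply implicit_solution_opp.
Qed.

(** * Taylor coefficients of the Monge chart *)

Lemma linear_bound_at_0 (f : R -> R) del K : 0 < del -> continuity_pt f 0 ->
  (forall x, 0 < x < del -> Rabs (f x) <= K * x) -> f 0 = 0.
Proof.
  intros Hdel Hc H. destruct (Req_dec (f 0) 0) as [E | NE]; [exact E | exfalso].
  pose proof (Rabs_pos_lt _ NE) as Hf0. pose proof (Rabs_pos K).
  destruct (Hc (Rabs (f 0) / 2) ltac:(lra)) as [eta [Heta Hc']].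
  set (x := Rmin (Rmin (eta / 2) (del / 2)) (Rabs (f 0) / (4 * (Rabs K + 1)))).
  assert (Hx : 0 < x /\ x <= eta / 2 /\ x <= del / 2 /\ x <= Rabs (f 0) / (4 * (Rabs K + 1))).
  { unfold x. pose proof (Rmin_l (eta / 2) (del / 2)). pose proof (Rmin_r (eta / 2) (del / 2)).
    pose proof (Rmin_l (Rmin (eta / 2) (del / 2)) (Rabs (f 0) / (4 * (Rabs K + 1)))).
    pose proof (Rmin_r (Rmin (eta / 2) (del / 2)) (Rabs (f 0) / (4 * (Rabs K + 1)))).
    repeat split; try lra. repeat apply Rmin_glb_lt; try lra.
    apply Rdiv_lt_0_compat; lra. }
  destruct Hx as (Hx0 & Hx1 & Hx2 & Hx3).
  specialize (H x ltac:(lra)).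
  assert (Hd : Rabs (f x - f 0) < Rabs (f 0) / 2).
  { apply Hc'. split; [split; [exact I | lra] |].
    simpl. unfold R_dist. rewrite Rminus_0_r, Rabs_right; lra. }
  assert (HK : K * x <= Rabs (f 0) / 4).
  { apply (Rmult_le_compat_l (Rabs K + 1)) in Hx3; [| lra].
    replace ((Rabs K + 1) * (Rabs (f 0) / (4 * (Rabs K + 1)))) with (Rabs (f 0) / 4)
      in Hx3 by (field; lra).
    pose proof (Rle_abs K). nra. }
  pose proof (Rabs_triang_inv (f 0) (f x)). rewrite Rabs_minus_sym in Hd. lra.
Qed.

Lemma poly_small_const_coeff_zero (c : nat -> R) n del K : 0 < del ->
  (forall x, 0 < x < del -> Rabs (sum_f_R0 (fun m => c m * x ^ m) n) <= K * x ^ S n) ->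
  c O = 0.
Proof.
  intros Hdel H.
  assert (Hsum0 : sum_f_R0 (fun m => c m * 0 ^ m) n = c O).
  { clear H. induction n as [| n IH]; simpl; [ring | rewrite IH; ring]. }
  rewrite <- Hsum0.
  apply (linear_bound_at_0 (fun x => sum_f_R0 (fun m => c m * x ^ m) n) (Rmin del 1) (Rabs K)).
  - apply Rmin_glb_lt; lra.
  - apply continuity_pt_of_ex_derive.
    clear H Hsum0. induction n as [| n IH]; simpl; [auto_derive; exact I |].
    apply (ex_derive_plus (fun x => sum_f_R0 (fun m => c m * x ^ m) n)); [exact IH |].
    auto_derive. exact I.
  - intros x Hx. pose proof (Rmin_l del 1). pose proof (Rmin_r del 1).
    eapply Rle_trans; [apply H; lra |].
    assert (Hxn : x ^ n <= 1) by (rewrite <- (pow1 n); apply pow_incr; lra).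
    pose proof (pow_le x n ltac:(lra)). pose proof (Rle_abs K). pose proof (Rabs_pos K).
    simpl. apply Rle_trans with (Rabs K * (x * x ^ n)).
    + apply Rmult_le_compat_r; nra.
    + apply Rmult_le_compat_l; nra.
Qed.

Lemma poly_small_coeffs_zero n : forall (c : nat -> R) del K, 0 < del ->
  (forall x, 0 < x < del -> Rabs (sum_f_R0 (fun m => c m * x ^ m) n) <= K * x ^ S n) ->
  forall m, (m <= n)%nat -> c m = 0.
Proof.
  induction n as [| n IH]; intros c del K Hdel H m Hm.
  - replace m with O by lia. now apply (poly_small_const_coeff_zero c O del K).
  - assert (E0 : c O = 0) by now apply (poly_small_const_coeff_zero c (S n) del K).
    destruct m as [| m]; [exact E0 |].
    apply (IH (fun m => c (S m)) del K Hdel); [| lia].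
    intros x Hx. specialize (H x Hx).
    rewrite decomp_sum, E0 in H by lia. simpl pred in H.
    rewrite Rmult_0_l, Rplus_0_l in H.
    replace (sum_f_R0 (fun i => c (S i) * x ^ S i) n)
      with (x * sum_f_R0 (fun i => c (S i) * x ^ i) n) in H
      by (rewrite scal_sum; apply sum_eq; intros i _; simpl; ring).
    rewrite Rabs_mult, Rabs_right in H by lra.
    apply (Rmult_le_reg_l x); [lra |]. simpl in H |- *. lra.
Qed.

Local Notation "q .[ i , j ]" := (q i%nat j%nat)
  (at level 2, left associativity, only parsing).

Definition quartic (q : nat -> nat -> R) (u v : R) : R :=
  q.[0, 0] + q.[1, 0] * u + q.[0, 1] * v + q.[2, 0] * u ^ 2 + q.[1, 1] * u * v + q.[0, 2] * v ^ 2
  + q.[3, 0] * u ^ 3 + q.[2, 1] * u ^ 2 * v + q.[1, 2] * u * v ^ 2 + q.[0, 3] * v ^ 3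
  + q.[4, 0] * u ^ 4 + q.[3, 1] * u ^ 3 * v + q.[2, 2] * u ^ 2 * v ^ 2 + q.[1, 3] * u * v ^ 3
  + q.[0, 4] * v ^ 4.

(** The homogeneous parts of [quartic q] evaluated at [(1, l)]. *)
Definition quartic_line_coeff (q : nat -> nat -> R) (l : R) (m : nat) : R :=
  match m with
  | 0 => q.[0, 0]
  | 1 => q.[1, 0] + q.[0, 1] * l
  | 2 => q.[2, 0] + q.[1, 1] * l + q.[0, 2] * l ^ 2
  | 3 => q.[3, 0] + q.[2, 1] * l + q.[1, 2] * l ^ 2 + q.[0, 3] * l ^ 3
  | _ => q.[4, 0] + q.[3, 1] * l + q.[2, 2] * l ^ 2 + q.[1, 3] * l ^ 3 + q.[0, 4] * l ^ 4
  end.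

Lemma quartic_on_line q l u :
  quartic q u (l * u) = sum_f_R0 (fun m => quartic_line_coeff q l m * u ^ m) 4.
Proof. unfold quartic, quartic_line_coeff. simpl. ring. Qed.

Lemma quartic_small_on_lines q rh K : 0 < rh ->
  (forall l u, Rabs l <= 1 -> 0 < u < rh -> Rabs (quartic q u (l * u)) <= K * u ^ 5) ->
  q.[1, 0] = 0 /\ q.[0, 1] = 0 /\ q.[2, 0] = 0 /\ q.[1, 1] = 0 /\ q.[0, 2] = 0 /\
  q.[3, 0] = 0 /\ q.[2, 1] = 0 /\ q.[4, 0] = 0.
Proof.
  intros Hrh H.
  assert (L : forall l m, Rabs l <= 1 -> (m <= 4)%nat -> quartic_line_coeff q l m = 0).
  { intros l m Hl Hm. apply (poly_small_coeffs_zero 4 _ rh K Hrh); [| exact Hm].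
    intros x Hx. rewrite <- quartic_on_line. now apply H. }
  assert (A0 : Rabs 0 <= 1) by (rewrite Rabs_R0; lra).
  assert (A1 : Rabs 1 <= 1) by (rewrite Rabs_R1; lra).
  assert (A2 : Rabs (-1) <= 1) by (rewrite Rabs_left; lra).
  assert (A3 : Rabs (1 / 2) <= 1) by (rewrite Rabs_right; lra).
  pose proof (L 0 1%nat A0 ltac:(lia)). pose proof (L 1 1%nat A1 ltac:(lia)).
  pose proof (L 0 2%nat A0 ltac:(lia)). pose proof (L 1 2%nat A1 ltac:(lia)).
  pose proof (L (-1) 2%nat A2 ltac:(lia)).
  pose proof (L 0 3%nat A0 ltac:(lia)). pose proof (L 1 3%nat A1 ltac:(lia)).
  pose proof (L (-1) 3%nat A2 ltac:(lia)). pose proof (L (1 / 2) 3%nat A3 ltac:(lia)).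
  pose proof (L 0 4%nat A0 ltac:(lia)).
  unfold quartic_line_coeff in *. repeat split; lra.
Qed.

Lemma DL_pol_4_origin f u v : DL_pol 4 f 0 0 u v =
  partial_derive 0 0 f 0 0 + partial_derive 1 0 f 0 0 * u + partial_derive 0 1 f 0 0 * v
  + partial_derive 2 0 f 0 0 / 2 * u ^ 2 + partial_derive 1 1 f 0 0 * u * v
  + partial_derive 0 2 f 0 0 / 2 * v ^ 2
  + partial_derive 3 0 f 0 0 / 6 * u ^ 3 + partial_derive 2 1 f 0 0 / 2 * u ^ 2 * v
  + partial_derive 1 2 f 0 0 / 2 * u * v ^ 2 + partial_derive 0 3 f 0 0 / 6 * v ^ 3
  + partial_derive 4 0 f 0 0 / 24 * u ^ 4 + partial_derive 3 1 f 0 0 / 6 * u ^ 3 * v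
  + partial_derive 2 2 f 0 0 / 4 * u ^ 2 * v ^ 2 + partial_derive 1 3 f 0 0 / 6 * u * v ^ 3
  + partial_derive 0 4 f 0 0 / 24 * v ^ 4.
Proof.
  unfold DL_pol, differential. cbn -[partial_derive Derive_n].
  unfold Binomial.C. cbn -[partial_derive Derive_n]. field.
Qed.

Lemma Rabs_on_line l u : Rabs l <= 1 -> 0 < u -> Rabs (l * u) <= u.
Proof.
  intros Hl Hu. rewrite Rabs_mult, (Rabs_right u) by lra.
  pose proof (Rabs_pos l). nra.
Qed.

Lemma taylor_4_on_lines h del : 0 < del -> ex_diff_n_box 5 del h ->
  exists rh K, 0 < rh /\ forall l u, Rabs l <= 1 -> 0 < u < rh ->
    Rabs (h u (l * u) - DL_pol 4 h 0 0 u (l * u)) <= K * u ^ 5.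
Proof.
  intros Hdel Hh. assert (Z : Rabs 0 < del) by (rewrite Rabs_R0; exact Hdel).
  destruct (Taylor_Lagrange_2d h 4 0 0 (ex_diff_n_box_locally 5 del h 0 0 Hh Z Z))
    as [K [e He]].
  exists e, K. split; [apply cond_pos |]. intros l u Hl Hu.
  pose proof (Rabs_on_line l u Hl ltac:(lra)).
  specialize (He u (l * u)). rewrite !Rminus_0_r, (Rabs_right u), Rmax_left in He by lra.
  apply He; lra.
Qed.

Lemma monge_on_lines h M dm k a b c d A B C D E : 0 < dm ->
  (forall x y, disk dm x y ->
     Rabs (h x y - mongeP k a b c d A B C D E x y) <= M * (sqrt (x ^ 2 + y ^ 2)) ^ 5) ->
  exists rh K, 0 < rh /\ forall l u, Rabs l <= 1 -> 0 < u < rh ->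
    Rabs (h u (l * u) - mongeP k a b c d A B C D E u (l * u)) <= K * u ^ 5.
Proof.
  intros Hdm HP. exists (dm / 2), (32 * Rabs M). split; [lra |]. intros l u Hl Hu.
  pose proof (Rabs_on_line l u Hl ltac:(lra)) as Hlu.
  assert (Hsq : (l * u) ^ 2 <= u ^ 2)
    by (rewrite <- (pow2_abs (l * u)); apply pow_incr; split; [apply Rabs_pos | exact Hlu]).
  assert (Hs : sqrt (u ^ 2 + (l * u) ^ 2) <= 2 * u).
  { rewrite <- (sqrt_pow2 (2 * u)) by lra. apply sqrt_le_1_alt. nra. }
  eapply Rle_trans; [apply HP; unfold disk; nra |].
  replace (32 * Rabs M * u ^ 5) with (Rabs M * (2 * u) ^ 5) by ring.
  pose proof (pow_le (sqrt (u ^ 2 + (l * u) ^ 2)) 5 (sqrt_pos _)).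
  apply Rle_trans with (Rabs M * sqrt (u ^ 2 + (l * u) ^ 2) ^ 5).
  - apply Rmult_le_compat_r; [lra | apply Rle_abs].
  - apply Rmult_le_compat_l; [apply Rabs_pos |]. apply pow_incr. split; [apply sqrt_pos | lra].
Qed.

(** [h_xxy = d] is recorded in both orders of differentiation, since [pd dX] and
    [pd dY] do not commute definitionally. *)
Definition monge_jet (h : R -> R -> R) (k a d A : R) : Prop :=
  hx h 0 0 = 0 /\ hy h 0 0 = 0 /\ hxx h 0 0 = 0 /\ hxy h 0 0 = 0 /\ hyy h 0 0 = k /\
  pd dX (hxx h) 0 0 = a /\ pd dY (hxx h) 0 0 = d /\ pd dX (hxy h) 0 0 = d /\
  pd dX (pd dX (hxx h)) 0 0 = A.

Lemma monge_jet_of_expansion h del M dm k a b c d A B C D E :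
  0 < del -> ex_diff_n_box 5 del h -> 0 < dm ->
  (forall x y, disk dm x y ->
     Rabs (h x y - mongeP k a b c d A B C D E x y) <= M * (sqrt (x ^ 2 + y ^ 2)) ^ 5) ->
  monge_jet h k a d A.
Proof.
  intros Hdel Hh Hdm HP.
  destruct (taylor_4_on_lines h del Hdel Hh) as (rh1 & K1 & Hrh1 & H1).
  destruct (monge_on_lines h M dm k a b c d A B C D E Hdm HP) as (rh2 & K2 & Hrh2 & H2).
  (* Taylor coefficient minus Monge coefficient; the catch-all branch is the
     [(0, 0)] one, the other indices do not occur in [quartic]. *)
  pose (q := fun i j : nat => match i, j with
     | 1, 0 => partial_derive 1 0 h 0 0
     | 0, 1 => partial_derive 0 1 h 0 0
     | 2, 0 => partial_derive 2 0 h 0 0 / 2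
     | 1, 1 => partial_derive 1 1 h 0 0
     | 0, 2 => partial_derive 0 2 h 0 0 / 2 - k / 2
     | 3, 0 => partial_derive 3 0 h 0 0 / 6 - a / 6
     | 2, 1 => partial_derive 2 1 h 0 0 / 2 - d / 2
     | 1, 2 => partial_derive 1 2 h 0 0 / 2 - b / 2
     | 0, 3 => partial_derive 0 3 h 0 0 / 6 - c / 6
     | 4, 0 => partial_derive 4 0 h 0 0 / 24 - A / 24
     | 3, 1 => partial_derive 3 1 h 0 0 / 6 - B / 6
     | 2, 2 => partial_derive 2 2 h 0 0 / 4 - C / 4
     | 1, 3 => partial_derive 1 3 h 0 0 / 6 - D / 6
     | 0, 4 => partial_derive 0 4 h 0 0 / 24 - E / 24
     | _, _ => partial_derive 0 0 h 0 0 end).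
  destruct (quartic_small_on_lines q (Rmin rh1 rh2) (K1 + K2))
    as (Q10 & Q01 & Q20 & Q11 & Q02 & Q30 & Q21 & Q40); [now apply Rmin_glb_lt | |].
  - intros l u Hl Hu. pose proof (Rmin_l rh1 rh2). pose proof (Rmin_r rh1 rh2).
    replace (quartic q u (l * u))
      with (- (h u (l * u) - DL_pol 4 h 0 0 u (l * u))
            + (h u (l * u) - mongeP k a b c d A B C D E u (l * u)))
      by (rewrite DL_pol_4_origin; unfold quartic, mongeP, q; ring).
    eapply Rle_trans; [apply Rabs_triang |]. rewrite Rabs_Ropp.
    specialize (H1 l u Hl ltac:(lra)). specialize (H2 l u Hl ltac:(lra)). lra.
  - assert (Hyxx : pd dY (hxx h) 0 0 = partial_derive 2 1 h 0 0).
    { change (pd dY (hxx h) 0 0) with (Derive (fun v => partial_derive 2 0 h 0 v) 0).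
      apply Derive_partial_derive.
      apply (ex_diff_n_box_locally _ del); [apply (ex_diff_n_box_le 5) | ..];
        rewrite ?Rabs_R0; auto; lia. }
    unfold q in *; cbv iota beta in *.
    unfold monge_jet. rewrite Hyxx. cbn in *. repeat split; lra.
Qed.

(** * Curvatures near the origin *)

Definition hess_det (h : R -> R -> R) (x y : R) : R :=
  hxx h x y * hyy h x y - hxy h x y * hxy h x y.

(** [gaussK = hess_det / W^4], since [EG - F^2 = W^2]. *)
Lemma gaussK_eq_0 h x y : gaussK h x y = 0 <-> hess_det h x y = 0.
Proof.
  unfold gaussK, se, sf, sg, fE, fF, fG, Wn, hess_det.
  set (X := hx h x y). set (Y := hy h x y).
  assert (HQ : 0 < 1 + X ^ 2 + Y ^ 2) by nra.
  pose proof (sqrt_lt_R0 _ HQ) as HW. pose proof (sqrt_sqrt _ (Rlt_le _ _ HQ)) as HW2.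
  set (W := sqrt (1 + X ^ 2 + Y ^ 2)) in *.
  replace ((hxx h x y / W * (hyy h x y / W) - (hxy h x y / W) ^ 2)
           / ((1 + X ^ 2) * (1 + Y ^ 2) - (X * Y) ^ 2))
    with ((hxx h x y * hyy h x y - hxy h x y * hxy h x y) / (W * W) / (1 + X ^ 2 + Y ^ 2))
    by (field; split; lra).
  rewrite HW2. split; intro H.
  - apply Rmult_eq_reg_r with (/ (1 + X ^ 2 + Y ^ 2) * / (1 + X ^ 2 + Y ^ 2));
      [unfold Rdiv in H; lra | apply Rmult_integral_contrapositive; split; apply Rinv_neq_0_compat; lra].
  - rewrite H. unfold Rdiv. ring.
Qed.

Lemma pd_mult_sub_sq (f1 f2 f3 : R -> R -> R) v x y :
  ex_pd v f1 x y -> ex_pd v f2 x y -> ex_pd v f3 x y ->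
  pd v (fun u w => f1 u w * f2 u w - f3 u w * f3 u w) x y =
  pd v f1 x y * f2 x y + f1 x y * pd v f2 x y - (pd v f3 x y * f3 x y + f3 x y * pd v f3 x y).
Proof.
  intros H1 H2 H3. destruct v; simpl in *.
  - rewrite (Derive_minus (fun t => f1 t y * f2 t y) (fun t => f3 t y * f3 t y))
      by (apply ex_derive_mult; assumption).
    now rewrite (Derive_mult (fun t => f1 t y)), (Derive_mult (fun t => f3 t y)).
  - rewrite (Derive_minus (fun t => f1 x t * f2 x t) (fun t => f3 x t * f3 x t))
      by (apply ex_derive_mult; assumption).
    now rewrite (Derive_mult (fun t => f1 x t)), (Derive_mult (fun t => f3 x t)).
Qed.

Lemma pd_pd_mult_sub_sq_origin (f1 f2 f3 : R -> R -> R) del : 0 < del ->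
  ex_diff_n_box 2 del f1 -> ex_diff_n_box 2 del f2 -> ex_diff_n_box 2 del f3 ->
  pd dX (pd dX (fun u w => f1 u w * f2 u w - f3 u w * f3 u w)) 0 0 =
  pd dX (pd dX f1) 0 0 * f2 0 0 + 2 * (pd dX f1 0 0 * pd dX f2 0 0)
  + f1 0 0 * pd dX (pd dX f2) 0 0
  - 2 * (pd dX (pd dX f3) 0 0 * f3 0 0 + pd dX f3 0 0 * pd dX f3 0 0).
Proof.
  intros Hd H1 H2 H3. assert (Z : Rabs 0 < del) by (rewrite Rabs_R0; exact Hd).
  change (pd dX (pd dX (fun u w => f1 u w * f2 u w - f3 u w * f3 u w)) 0 0) with
    (Derive (fun t => pd dX (fun u w => f1 u w * f2 u w - f3 u w * f3 u w) t 0) 0).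
  rewrite (Derive_ext_loc _ (fun t => pd dX f1 t 0 * f2 t 0 + f1 t 0 * pd dX f2 t 0
            - (pd dX f3 t 0 * f3 t 0 + f3 t 0 * pd dX f3 t 0))).
  2:{ exists (mkposreal del Hd). intros t Ht. change (Rabs (t - 0) < del) in Ht.
      rewrite Rminus_0_r in Ht.
      apply pd_mult_sub_sq; eapply (ex_diff_n_ex_derive_x 1); [apply H1 | apply H2 | apply H3];
        assumption. }
  assert (Hd1 : forall f, ex_diff_n_box 2 del f -> ex_derive (fun t => f t 0) 0)
    by (intros f Hf; apply (ex_diff_n_ex_derive_x 1), Hf; exact Z).
  assert (Hd2 : forall f, ex_diff_n_box 2 del f -> ex_derive (fun t => pd dX f t 0) 0)
    by (intros f Hf; apply (ex_diff_n_ex_derive_x 0), ex_diff_n_pd, Hf; exact Z).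
  pose proof (Hd1 _ H1). pose proof (Hd1 _ H2). pose proof (Hd1 _ H3).
  pose proof (Hd2 _ H1). pose proof (Hd2 _ H2). pose proof (Hd2 _ H3).
  rewrite (Derive_minus (fun t => pd dX f1 t 0 * f2 t 0 + f1 t 0 * pd dX f2 t 0)
                        (fun t => pd dX f3 t 0 * f3 t 0 + f3 t 0 * pd dX f3 t 0))
    by (apply (ex_derive_plus (fun t => _ * _)); apply ex_derive_mult; assumption).
  rewrite (Derive_plus (fun t => pd dX f1 t 0 * f2 t 0) (fun t => f1 t 0 * pd dX f2 t 0))
    by (apply ex_derive_mult; assumption).
  rewrite (Derive_plus (fun t => pd dX f3 t 0 * f3 t 0) (fun t => f3 t 0 * pd dX f3 t 0))
    by (apply ex_derive_mult; assumption).
  rewrite !Derive_mult by assumption.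
  simpl. ring.
Qed.


Lemma hess_det_jet h del k a d A : 0 < del -> ex_diff_n_box 5 del h ->
  monge_jet h k a d A ->
  ex_diff_n_box 3 del (hess_det h) /\ hess_det h 0 0 = 0 /\
  pd dX (hess_det h) 0 0 = a * k /\ pd dY (hess_det h) 0 0 = d * k /\
  (a = 0 -> pd dX (pd dX (hess_det h)) 0 0 = A * k - 2 * d ^ 2).
Proof.
  intros Hdel Hh (V1 & V2 & V3 & V4 & V5 & Va & Vyd & Vd & VA).
  assert (Z : Rabs 0 < del) by (rewrite Rabs_R0; exact Hdel).
  assert (H2 : forall v w m, (m <= 3)%nat -> ex_diff_n_box m del (pd v (pd w h))).
  { intros v w m Hm. apply (ex_diff_n_box_le 3); [exact Hm |].
    now apply ex_diff_n_box_pd, ex_diff_n_box_pd. }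
  assert (Hex : forall v v' w, ex_pd v (pd v' (pd w h)) 0 0).
  { intros v v' w. destruct v;
      [apply (ex_diff_n_ex_derive_x 2) | apply (ex_diff_n_ex_derive_y 2)];
      apply (H2 _ _ 3%nat); auto. }
  split; [apply ex_diff_n_box_minus; apply ex_diff_n_box_mult; apply H2; lia |].
  split; [unfold hess_det; rewrite V3, V4, V5; ring |].
  split; [| split].
  - unfold hess_det. rewrite pd_mult_sub_sq by apply Hex.
    change (pd dX (pd dX (pd dX h)) 0 0) with (pd dX (hxx h) 0 0).
    rewrite Va, V3, V4, V5. ring.
  - unfold hess_det. rewrite pd_mult_sub_sq by apply Hex.
    change (pd dY (pd dX (pd dX h)) 0 0) with (pd dY (hxx h) 0 0).
    rewrite Vyd, V3, V4, V5. ring.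
  - intro Ha. unfold hess_det.
    rewrite (pd_pd_mult_sub_sq_origin _ _ _ del Hdel) by (apply H2; lia).
    change (pd dX (pd dX (pd dX (pd dX h))) 0 0) with (pd dX (pd dX (hxx h)) 0 0).
    change (pd dX (pd dX (pd dX h)) 0 0) with (pd dX (hxx h) 0 0).
    change (pd dX (pd dX (pd dY h)) 0 0) with (pd dX (hxy h) 0 0).
    rewrite VA, Va, Vd, V3, V4, V5, Ha. ring.
Qed.

(** * Minimal principal curvature lines *)

Lemma is_lim_mult_R (f g : R -> R) x (a b : R) :
  is_lim f x a -> is_lim g x b -> is_lim (fun t => f t * g t) x (a * b).
Proof. intros H1 H2. exact (is_lim_mult f g x a b H1 H2 I). Qed.

Lemma is_lim_div_id (g : R -> R) l :
  derivable_pt_lim g 0 l -> g 0 = 0 -> is_lim (fun t => g t / t) 0 l.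
Proof.
  intros H H0. apply is_lim_spec. intros eps.
  destruct (H eps (cond_pos eps)) as [dl Hdl]. exists dl. intros y Hy Hne.
  change (Rabs (y - 0) < dl) in Hy. rewrite Rminus_0_r in Hy.
  specialize (Hdl y Hne Hy). now rewrite Rplus_0_l, H0, Rminus_0_r in Hdl.
Qed.

Lemma is_lim_comp_2d_div_id (f : R -> R -> R) (p q : R -> R) fx fy l1 l2 :
  differentiable_pt_lim f 0 0 fx fy -> p 0 = 0 -> q 0 = 0 -> f 0 0 = 0 ->
  is_derive p 0 l1 -> is_derive q 0 l2 ->
  is_lim (fun t => f (p t) (q t) / t) 0 (fx * l1 + fy * l2).
Proof.
  intros Hf Hp Hq H0 D1 D2. apply is_lim_div_id; [| now rewrite Hp, Hq].
  apply derivable_pt_lim_comp_2d; [now rewrite Hp, Hq | now apply is_derive_Reals ..].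
Qed.

Lemma is_lim_comp_2d (f : R -> R -> R) (p q : R -> R) :
  continuity_2d_pt f 0 0 -> p 0 = 0 -> q 0 = 0 -> continuity_pt p 0 -> continuity_pt q 0 ->
  is_lim (fun t => f (p t) (q t)) 0 (f 0 0).
Proof.
  intros Hf Hp Hq Cp Cq.
  replace (f 0 0) with (f (p 0) (q 0)) by now rewrite Hp, Hq.
  apply (is_lim_continuity (fun t => f (p t) (q t))), continuity_pt_comp_2d;
    [now rewrite Hp, Hq | exact Cp | exact Cq].
Qed.

Lemma Wn_pos h x y : 0 < Wn h x y.
Proof. unfold Wn. apply sqrt_lt_R0. nra. Qed.

Lemma first_form_det_pos h x y : 0 < fE h x y * fG h x y - fF h x y ^ 2.
Proof. unfold fE, fG, fF. nra. Qed.

Lemma continuity_2d_pt_div (f g : R -> R -> R) x y :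
  continuity_2d_pt f x y -> continuity_2d_pt g x y -> g x y <> 0 ->
  continuity_2d_pt (fun u v => f u v / g u v) x y.
Proof. intros Hf Hg H. apply continuity_2d_pt_mult; [| apply continuity_2d_pt_inv]; assumption. Qed.

Lemma continuity_2d_pt_sq (f : R -> R -> R) x y :
  continuity_2d_pt f x y -> continuity_2d_pt (fun u v => f u v ^ 2) x y.
Proof.
  intro H. apply continuity_2d_pt_ext_loc with (fun u v => f u v * f u v);
    [apply locally_2d_forall; intros; ring | now apply continuity_2d_pt_mult].
Qed.

Ltac continuity_2d :=
  repeat first [ assumption | apply continuity_2d_pt_plus | apply continuity_2d_pt_minus
               | apply continuity_2d_pt_opp | apply continuity_2d_pt_mult | apply continuity_2d_pt_sq
               | apply continuity_2d_pt_const ].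

Section Curvatures.

Variables (h : R -> R -> R) (x y : R).
Hypotheses (C1 : continuity_2d_pt (hx h) x y) (C2 : continuity_2d_pt (hy h) x y)
  (C3 : continuity_2d_pt (hxx h) x y) (C4 : continuity_2d_pt (hxy h) x y)
  (C5 : continuity_2d_pt (hyy h) x y).

Lemma Wn_continuous : continuity_2d_pt (Wn h) x y.
Proof.
  apply (continuity_1d_2d_pt_comp sqrt (fun u v => 1 + hx h u v ^ 2 + hy h u v ^ 2));
    [apply continuity_pt_sqrt; nra | continuity_2d].
Qed.

Lemma second_form_continuous :
  continuity_2d_pt (se h) x y /\ continuity_2d_pt (sf h) x y /\ continuity_2d_pt (sg h) x y.
Proof.
  pose proof (Wn_pos h x y). pose proof Wn_continuous.
  repeat split; apply continuity_2d_pt_div; auto; lra.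
Qed.

Lemma first_form_continuous :
  continuity_2d_pt (fE h) x y /\ continuity_2d_pt (fF h) x y /\ continuity_2d_pt (fG h) x y.
Proof. unfold fE, fF, fG. repeat split; continuity_2d. Qed.

Lemma curvatures_continuous :
  continuity_2d_pt (meanH h) x y /\ continuity_2d_pt (gaussK h) x y.
Proof.
  destruct second_form_continuous as (Ce & Cf & Cg).
  destruct first_form_continuous as (CE & CF & CG).
  pose proof (first_form_det_pos h x y).
  split; apply continuity_2d_pt_div; try lra; continuity_2d.
Qed.

End Curvatures.

Lemma ex_diff_n_box_differentiable_origin f del : 0 < del -> ex_diff_n_box 2 del f ->
  differentiable_pt_lim f 0 0 (pd dX f 0 0) (pd dY f 0 0).
Proof.
  intros Hdel Hf. apply ex_diff_n_differentiable, (ex_diff_n_box_locally 2 del);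
    [exact Hf | ..]; rewrite Rabs_R0; exact Hdel.
Qed.

Section PrincipalLine.

Variables (h : R -> R -> R) (del k a d A : R).
Hypotheses (Hdel : 0 < del) (Hk : 0 < k) (Hh : ex_diff_n_box 4 del h)
  (Hjet : monge_jet h k a d A).

Lemma h_ex_diff_n_origin : ex_diff_n h 4 0 0.
Proof. apply Hh; rewrite Rabs_R0; exact Hdel. Qed.

Lemma h_derivatives_continuous_origin :
  continuity_2d_pt (hx h) 0 0 /\ continuity_2d_pt (hy h) 0 0 /\
  continuity_2d_pt (hxx h) 0 0 /\ continuity_2d_pt (hxy h) 0 0 /\
  continuity_2d_pt (hyy h) 0 0.
Proof.
  pose proof h_ex_diff_n_origin as Z.
  repeat split; [apply (ex_diff_n_continuity_2d 3) | apply (ex_diff_n_continuity_2d 3) | ..];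
    try apply (ex_diff_n_continuity_2d 2); repeat apply ex_diff_n_pd; exact Z.
Qed.

Lemma Wn_origin : Wn h 0 0 = 1.
Proof.
  destruct Hjet as (V1 & V2 & _). unfold Wn. rewrite V1, V2.
  replace (1 + 0 ^ 2 + 0 ^ 2) with 1 by ring. apply sqrt_1.
Qed.

Lemma kmin_origin : continuity_2d_pt (kmin h) 0 0 /\ kmin h 0 0 = 0.
Proof.
  destruct Hjet as (V1 & V2 & V3 & V4 & V5 & _).
  destruct h_derivatives_continuous_origin as (C1 & C2 & C3 & C4 & C5).
  destruct (curvatures_continuous h 0 0 C1 C2 C3 C4 C5) as [CH CK].
  assert (H0 : meanH h 0 0 = k / 2).
  { unfold meanH, se, sf, sg, fE, fF, fG. rewrite Wn_origin, V1, V2, V3, V4, V5. field. }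
  assert (K0 : gaussK h 0 0 = 0).
  { unfold gaussK, se, sf, sg, fE, fF, fG. rewrite Wn_origin, V1, V2, V3, V4, V5. field. }
  assert (S0 : sqrt (meanH h 0 0 ^ 2 - gaussK h 0 0) = k / 2).
  { rewrite H0, K0, Rminus_0_r. apply sqrt_pow2. lra. }
  split.
  - unfold kmin. apply continuity_2d_pt_minus; [exact CH |].
    apply (continuity_1d_2d_pt_comp sqrt (fun u v => meanH h u v ^ 2 - gaussK h u v));
      [apply continuity_pt_sqrt; rewrite H0, K0; nra | continuity_2d].
  - unfold kmin. rewrite S0, H0. ring.
Qed.

Section TangentCurve.

Variables b1 b2 : R -> R.
Hypotheses (B1 : b1 0 = 0) (B2 : b2 0 = 0) (Hb2 : Derive b2 0 = 0)
  (Ex1 : ex_derive b1 0) (Ex2 : ex_derive b2 0)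
  (Cd1 : continuous (Derive b1) 0) (Exd2 : ex_derive (Derive b2) 0).

Lemma along_curve_limit f : continuity_2d_pt f 0 0 ->
  is_lim (fun t => f (b1 t) (b2 t)) 0 (f 0 0).
Proof. intro Hf. apply is_lim_comp_2d; auto using continuity_pt_of_ex_derive. Qed.

Lemma along_curve_div_t_limit f : ex_diff_n_box 2 del f -> f 0 0 = 0 ->
  is_lim (fun t => f (b1 t) (b2 t) / t) 0 (pd dX f 0 0 * Derive b1 0).
Proof.
  intros Hf Hf0.
  replace (pd dX f 0 0 * Derive b1 0)
    with (pd dX f 0 0 * Derive b1 0 + pd dY f 0 0 * Derive b2 0) by (rewrite Hb2; ring).
  apply is_lim_comp_2d_div_id; auto using Derive_correct.
  now apply (ex_diff_n_box_differentiable_origin f del).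
Qed.

(** The second equation of [principal_dir] along [(b1, b2)], divided by [t]. *)
Lemma principal_eq_div_t_limit :
  is_lim (fun t => ((sf h (b1 t) (b2 t) - kmin h (b1 t) (b2 t) * fF h (b1 t) (b2 t))
                    * Derive b1 t
                    + (sg h (b1 t) (b2 t) - kmin h (b1 t) (b2 t) * fG h (b1 t) (b2 t))
                    * Derive b2 t) / t) 0
         (d * Derive b1 0 ^ 2 + k * Derive_n b2 2 0).
Proof.
  destruct Hjet as (V1 & V2 & V3 & V4 & V5 & _ & _ & Vd & _).
  destruct h_derivatives_continuous_origin as (C1 & C2 & C3 & C4 & C5).
  destruct (second_form_continuous h 0 0 C1 C2 C3 C4 C5) as (_ & _ & Csg).
  destruct (first_form_continuous h 0 0 C1 C2) as (_ & _ & CG).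
  destruct kmin_origin as [Ck K0].
  assert (Ly := along_curve_div_t_limit (hy h)
                  ltac:(apply (ex_diff_n_box_le 3), ex_diff_n_box_pd, Hh; lia) V2).
  assert (Lxy := along_curve_div_t_limit (hxy h)
                   ltac:(apply ex_diff_n_box_pd, ex_diff_n_box_pd, Hh) V4).
  assert (LW : is_lim (fun t => / Wn h (b1 t) (b2 t)) 0 1).
  { rewrite <- Rinv_1, <- Wn_origin. apply (along_curve_limit (fun u v => / Wn h u v)).
    apply continuity_2d_pt_inv; [now apply Wn_continuous | rewrite Wn_origin; lra]. }
  assert (Ld1 : is_lim (Derive b1) 0 (Derive b1 0))
    by now apply is_lim_continuity, continuity_pt_filterlim.
  assert (Ld2 : is_lim (fun t => Derive b2 t / t) 0 (Derive_n b2 2 0))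
    by (apply is_lim_div_id; [apply is_derive_Reals, Derive_correct, Exd2 | exact Hb2]).
  apply (is_lim_ext_loc (fun t => ((hxy h (b1 t) (b2 t) / t) * / Wn h (b1 t) (b2 t)
            - kmin h (b1 t) (b2 t) * (hx h (b1 t) (b2 t) * (hy h (b1 t) (b2 t) / t)))
            * Derive b1 t
            + (sg h (b1 t) (b2 t) - kmin h (b1 t) (b2 t) * fG h (b1 t) (b2 t))
            * (Derive b2 t / t))).
  - exists (mkposreal 1 Rlt_0_1). intros t _ Ht. pose proof (Wn_pos h (b1 t) (b2 t)).
    unfold sf, fF, hx, hy. field. lra.
  - replace (d * Derive b1 0 ^ 2 + k * Derive_n b2 2 0) with
      ((pd dX (hxy h) 0 0 * Derive b1 0 * 1
        - kmin h 0 0 * (hx h 0 0 * (pd dX (hy h) 0 0 * Derive b1 0))) * Derive b1 0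
       + (sg h 0 0 - kmin h 0 0 * fG h 0 0) * Derive_n b2 2 0)
      by (unfold sg, fG; rewrite Vd, K0, V1, V2, V5, Wn_origin; field).
    apply is_lim_plus'; apply is_lim_mult_R; [| exact Ld1 | | exact Ld2]; apply is_lim_minus'.
    + apply is_lim_mult_R; [exact Lxy | exact LW].
    + apply is_lim_mult_R; [| apply is_lim_mult_R; [| exact Ly]]; now apply along_curve_limit.
    + now apply along_curve_limit.
    + apply is_lim_mult_R; now apply along_curve_limit.
Qed.

End TangentCurve.

Lemma min_curvature_line_graph_second_deriv eta beta :
  0 < eta -> min_curvature_line h eta beta -> beta 0 = (0, 0) ->
  Derive (crvy beta) 0 = 0 -> graph_second_deriv beta = - d / k.
Proof.
  intros Heta [[C2x [C2y Hreg]] Hpr] Hb0 Hb2.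
  assert (E0 : Rabs 0 < eta) by (rewrite Rabs_R0; exact Heta).
  destruct (C2x 0 E0) as (Ex1 & _ & Cd1 & _). destruct (C2y 0 E0) as (Ex2 & Exd2 & _).
  assert (Hl1 : Derive (crvx beta) 0 <> 0) by (destruct (Hreg 0 E0); tauto).
  assert (B1 : crvx beta 0 = 0) by (unfold crvx; now rewrite Hb0).
  assert (B2 : crvy beta 0 = 0) by (unfold crvy; now rewrite Hb0).
  pose proof (principal_eq_div_t_limit _ _ B1 B2 Hb2 Ex1 Ex2 Cd1 Exd2) as L.
  apply (is_lim_ext_loc _ (fun _ => 0)) in L.
  2:{ exists (mkposreal eta Heta). intros t Ht _.
      change (Rabs (t - 0) < eta) in Ht. rewrite Rminus_0_r in Ht.
      destruct (Hpr t Ht) as (_ & _ & Eq2). rewrite Eq2. unfold Rdiv. ring. }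
  apply is_lim_unique in L. rewrite Lim_const in L.
  apply Rbar_finite_eq in L. unfold graph_second_deriv.
  apply (Rmult_eq_reg_r (k * Derive (crvx beta) 0 ^ 2)); [| apply Rmult_integral_contrapositive; split; [lra | now apply pow_nonzero]].
  field_simplify; [lra | lra | exact Hl1].
Qed.

End PrincipalLine.

(** * The parabolic curve *)

Definition zero_set_param (Z : R -> R -> Prop) (eps : R) (gam : R -> R * R) : Prop :=
  0 < eps /\ regular_C2_curve eps gam /\ gam 0 = (0, 0) /\
  (forall s t, Rabs s < eps -> Rabs t < eps -> gam s = gam t -> s = t) /\
  (exists delta, 0 < delta /\ forall x y, disk delta x y ->
     (Z x y <-> exists t, Rabs t < eps /\ gam t = (x, y))).

Lemma C2_on_id e : C2_on e (fun t => t).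
Proof.
  intros t _.
  assert (E1 : forall x, Derive (fun t => t) x = 1) by (intro; apply Derive_id).
  assert (E2 : forall x, Derive (Derive (fun t => t)) x = 0)
    by (intro x; rewrite (Derive_ext _ (fun _ => 1) x E1); apply Derive_const).
  split; [apply ex_derive_id |].
  split; [apply ex_derive_ext with (fun _ => 1); [intro; symmetry; apply E1 | apply ex_derive_const] |].
  split; [apply (continuous_ext_loc _ (fun _ => 1)) | apply (continuous_ext_loc _ (fun _ => 0))];
    try apply continuous_const; apply filter_forall; intro; symmetry; [apply E1 | apply E2].
Qed.

Lemma graph_zero_set_param G e1 b phi (Z : R -> R -> Prop) :
  (forall x y, Z x y <-> G x y = 0) -> implicit_solution G e1 b phi ->
  zero_set_param Z e1 (fun t => (t, phi t)).
Proof.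
  intros HZ (He1 & Hb & H0 & Hs & Hu & HC2 & _).
  split; [exact He1 |].
  split; [split; [exact (C2_on_id e1) | split; [exact HC2 |]] |].
  { intros t _. left. unfold crvx. simpl. rewrite Derive_id. lra. }
  split; [now rewrite H0 |].
  split; [intros s t _ _ E; now injection E |].
  exists (Rmin e1 b). split; [now apply Rmin_glb_lt |].
  intros x y Hxy. pose proof (Rmin_l e1 b). pose proof (Rmin_r e1 b).
  destruct (box_of_disk (Rmin e1 b) x y ltac:(now apply Rmin_glb_lt) Hxy) as [Hx Hy].
  rewrite HZ. split.
  - intro Hz. exists x. split; [lra |]. f_equal. symmetry. apply Hu; [lra | lra | exact Hz].
  - intros (t & Ht & E). injection E as <- <-. now apply Hs.
Qed.

Lemma zero_set_param_swap Z eps gam : zero_set_param Z eps gam ->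
  zero_set_param (fun x y => Z y x) eps (fun t => (snd (gam t), fst (gam t))).
Proof.
  intros (He & (Cx & Cy & Hreg) & H0 & Hinj & delta & Hd & HZ).
  split; [exact He |].
  split; [split; [exact Cy | split; [exact Cx |]] |].
  { intros t Ht. destruct (Hreg t Ht); [right | left]; assumption. }
  split; [now rewrite H0 |].
  split.
  - intros s t Hs Ht E. injection E as E1 E2. apply Hinj; [exact Hs | exact Ht |].
    now rewrite (surjective_pairing (gam s)), (surjective_pairing (gam t)), E1, E2.
  - exists delta. split; [exact Hd |]. intros x y Hxy. rewrite HZ by (unfold disk in *; lra).
    split; intros (t & Ht & E); exists t; split; try exact Ht;
      [rewrite E | rewrite (surjective_pairing (gam t)); injection E as -> ->]; reflexivity.
Qed.

Definition parabolic_tangency (h : R -> R -> R) (k a d A : R) (gam : R -> R * R) : Prop :=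
  a * Derive (crvx gam) 0 + d * Derive (crvy gam) 0 = 0 /\
  (a <> 0 -> Derive (crvy gam) 0 <> 0) /\
  (a = 0 ->
     Derive (crvy gam) 0 = 0 /\
     (d * k * (A * k - 3 * d ^ 2) <> 0 ->
      forall (eta : R) (beta : R -> R * R),
        0 < eta -> min_curvature_line h eta beta -> beta 0 = (0, 0) ->
        Derive (crvy beta) 0 = 0 -> graph_second_deriv gam <> graph_second_deriv beta)).

Lemma pd_swap v f x y :
  pd v (fun s t => f t s) x y = pd (match v with dX => dY | dY => dX end) f y x.
Proof. now destruct v. Qed.

Section ParabolicCurve.

Variables (h : R -> R -> R) (del k a d A : R).
Hypotheses (Hdel : 0 < del) (Hk : 0 < k) (Hh : ex_diff_n_box 5 del h)
  (Hjet : monge_jet h k a d A).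

Lemma parabolic_curve_over_y_axis : d = 0 -> a <> 0 ->
  exists eps gam, zero_set_param (fun x y => gaussK h x y = 0) eps gam /\
                  parabolic_tangency h k a d A gam.
Proof.
  intros Hd Ha. destruct (hess_det_jet h del k a d A Hdel Hh Hjet) as (HF & F0 & Fx & Fy & _).
  destruct (implicit_function_theorem (fun s t => hess_det h t s) del) as (e1 & b & phi & Hsol).
  - exact Hdel.
  - now apply ex_diff_n_box_swap.
  - exact F0.
  - rewrite (pd_swap dY (hess_det h)), Fx. apply Rmult_integral_contrapositive; split; lra.
  - exists e1, (fun t => (phi t, t)). split.
    + apply (zero_set_param_swap (fun x y => gaussK h y x = 0) e1 (fun t => (t, phi t))).
      apply (graph_zero_set_param (fun s t => hess_det h t s) e1 b phi);
        [intros; apply gaussK_eq_0 | exact Hsol].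
    + destruct Hsol as (_ & _ & _ & _ & _ & _ & HD & _).
      assert (Dx : Derive (crvx (fun t => (phi t, t))) 0 = 0).
      { unfold crvx. rewrite (Derive_ext _ phi) by reflexivity. rewrite HD.
        unfold implicit_slope.
        rewrite (pd_swap dX (hess_det h)), (pd_swap dY (hess_det h)), Fx, Fy, Hd. field. lra. }
      assert (Dy : Derive (crvy (fun t => (phi t, t))) 0 = 1) by apply Derive_id.
      unfold parabolic_tangency. rewrite Dx, Dy. split; [lra |]. split; [lra |]. contradiction.
Qed.

Lemma parabolic_curve_over_x_axis : d <> 0 ->
  exists eps gam, zero_set_param (fun x y => gaussK h x y = 0) eps gam /\
                  parabolic_tangency h k a d A gam.
Proof.
  intros Hd. destruct (hess_det_jet h del k a d A Hdel Hh Hjet) as (HF & F0 & Fx & Fy & Fxx).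
  destruct (implicit_function_theorem (hess_det h) del Hdel HF F0) as (e1 & b & phi & Hsol);
    [rewrite Fy; apply Rmult_integral_contrapositive; split; lra |].
  exists e1, (fun t => (t, phi t)). split.
  { apply (graph_zero_set_param (hess_det h) e1 b phi); [intros; apply gaussK_eq_0 | exact Hsol]. }
  destruct Hsol as (_ & _ & _ & _ & _ & _ & HD & HD2).
  assert (Dx : Derive (crvx (fun t => (t, phi t))) 0 = 1) by apply Derive_id.
  assert (Dy : Derive (crvy (fun t => (t, phi t))) 0 = - (a / d)).
  { unfold crvy. rewrite (Derive_ext _ phi) by reflexivity. rewrite HD.
    unfold implicit_slope. rewrite Fx, Fy. field. lra. }
  unfold parabolic_tangency. rewrite Dx, Dy. split; [field; exact Hd |].
  split; [intros Ha E; apply Ha; apply (Rmult_eq_reg_r (/ d)); [lra | now apply Rinv_neq_0_compat] |].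
  intro Ha. split; [rewrite Ha; field; exact Hd |].
  intros Hq eta beta Heta Hbeta Hb0 Hb2.
  rewrite (min_curvature_line_graph_second_deriv h del k a d A Hdel Hk
             (ex_diff_n_box_le 5 del 4 h ltac:(lia) Hh) Hjet eta beta Heta Hbeta Hb0 Hb2).
  unfold graph_second_deriv. rewrite Dx.
  replace (Derive_n (crvy (fun t => (t, phi t))) 2 0) with (Derive_n phi 2 0)
    by (apply Derive_n_ext; reflexivity).
  rewrite HD2 by (rewrite Fx, Ha; ring). rewrite Fy, (Fxx Ha).
  intro E. apply Hq.
  assert (E' : A * k - 2 * d ^ 2 = d ^ 2).
  { replace (A * k - 2 * d ^ 2)
      with (- ((A * k - 2 * d ^ 2) / (d * k)) / 1 ^ 2 * - (d * k)) by (field; lra).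
    rewrite E. field. lra. }
  replace (A * k - 3 * d ^ 2) with 0 by lra. ring.
Qed.

End ParabolicCurve.

Lemma parabolic_curve_exists h del k a d A :
  0 < del -> 0 < k -> ex_diff_n_box 5 del h -> monge_jet h k a d A -> a ^ 2 + d ^ 2 <> 0 ->
  exists eps gam, zero_set_param (fun x y => gaussK h x y = 0) eps gam /\
                  parabolic_tangency h k a d A gam.
Proof.
  intros Hdel Hk Hh Hjet Had. destruct (Req_dec d 0) as [Hd | Hd].
  - apply (parabolic_curve_over_y_axis h del); try assumption.
    intro Ha. apply Had. rewrite Ha, Hd. ring.
  - now apply (parabolic_curve_over_x_axis h del).
Qed.

Theorem lemma3 (r : nat) (h : R -> R -> R) (rho : R)
  (k a b c d A B C D E : R) :
  (6 <= r)%nat ->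
  0 < rho ->
  Cr_on r (disk rho) h ->
  (* h = P + O(5) at 0 *)
  (exists M delta, 0 < delta /\ forall x y, disk delta x y ->
     Rabs (h x y - mongeP k a b c d A B C D E x y)
       <= M * (sqrt (x ^ 2 + y ^ 2)) ^ 5) ->
  0 < k ->
  a ^ 2 + d ^ 2 <> 0 ->
  exists (eps : R) (gam : R -> R * R),
    0 < eps /\
    regular_C2_curve eps gam /\
    gam 0 = (0, 0) /\
    (forall s t, Rabs s < eps -> Rabs t < eps -> gam s = gam t -> s = t) /\
    (* near 0 the parabolic set is exactly the curve gam *)
    (exists delta, 0 < delta /\ forall x y, disk delta x y ->
       (gaussK h x y = 0 <-> exists t, Rabs t < eps /\ gam t = (x, y))) /\
    (* normal to (a,d) at 0 *)
    a * Derive (crvx gam) 0 + d * Derive (crvy gam) 0 = 0 /\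
    (* a <> 0: transversal to (1,0) *)
    (a <> 0 -> Derive (crvy gam) 0 <> 0) /\
    (* a = 0: tangent to (1,0), and quadratic contact with the
       minimal principal curvature line through 0 tangent to (1,0) *)
    (a = 0 ->
       Derive (crvy gam) 0 = 0 /\
       (d * k * (A * k - 3 * d ^ 2) <> 0 ->
        forall (eta : R) (beta : R -> R * R),
          0 < eta ->
          min_curvature_line h eta beta ->
          beta 0 = (0, 0) ->
          Derive (crvy beta) 0 = 0 ->
          graph_second_deriv gam <> graph_second_deriv beta)).
Proof.
  intros Hr Hrho Hcr (M & dm & Hdm & HP) Hk Had.
  assert (Hh : ex_diff_n_box 5 (rho / 2) h)
    by (apply (Cr_on_ex_diff_n_box r rho h nil); [exact Hcr | simpl; lia]).
  pose proof (monge_jet_of_expansion h (rho / 2) M dm k a b c d A B C D E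
                ltac:(lra) Hh Hdm HP) as Hjet.
  destruct (parabolic_curve_exists h (rho / 2) k a d A ltac:(lra) Hk Hh Hjet Had)
    as (eps & gam & (He & Hreg & H0 & Hinj & Hzero) & Htan).
  exists eps, gam. exact (conj He (conj Hreg (conj H0 (conj Hinj (conj Hzero Htan))))).
Qed.
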